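(* Fix $0<\alpha<1$ and an integer $l\ge1$, let $\phi_\alpha(t)=t^{\alpha-1}E_{\alpha,\alpha}(-t^{\alpha})$, and let $P_{n,\alpha,l}(t)=\frac{(l)_n}{n!}t^{(n+l)\alpha-1}E^{n+l}_{\alpha,(n+l)\alpha}(-t^{\alpha})$. Define $m_{\alpha,l}(t)=\sum_{n=0}^\infty n\,P_{n,\alpha,l}(t)$ for $t>0$. Then $$m_{\alpha,l}(t)=-\frac{\partial}{\partial k}\Big[t^{\alpha l-1}E^{l}_{\alpha,\alpha l}\big(-(1-e^{-k})t^{\alpha}\big)\Big]_{k=0}=\frac{l\,t^{l\alpha+\alpha-1}}{\Gamma((l+1)\alpha)},$$ and $m_{\alpha,l}$ satisfies the renewal equation $$m_{\alpha,l}(t)=l\,(I^{\alpha l}_{0+}\phi_\alpha)(t)+(m_{\alpha,l}*\phi_\alpha)(t),\qquad t>0.$$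
   Context: $E^{\gamma}_{\alpha,\beta}(x)=\sum_{k\ge0}\frac{(\gamma)_k x^k}{\Gamma(\alpha k+\beta)\,k!}$ with Pochhammer symbol $(\gamma)_k$, $E_{\alpha,\beta}=E^1_{\alpha,\beta}$. $(I^{\beta}_{0+}f)(t)=\frac{1}{\Gamma(\beta)}\int_0^t(t-u)^{\beta-1}f(u)\,du$ for $\beta>0$. Laplace convolution $(f*g)(t)=\int_0^t f(t-u)g(u)\,du$. *)

From Stdlib Require Import Reals Lra ClassicalEpsilon Arith Factorial.
Open Scope R_scope.

(** Value of a convergent series (sum_{n>=0} f n); arbitrary if divergent. *)
Definition sum_inf (f : nat -> R) : R :=
  epsilon (inhabits 0) (fun l => infinite_sum f l).

Fixpoint prod_shift (x : R) (n : nat) : R :=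
  match n with
  | O => x
  | S k => prod_shift x k * (x + INR (S k))
  end.

(** Gauss' limit definition of the Gamma function:
    Gamma(x) = lim_{n->oo} n! n^x / (x (x+1) ... (x+n)). *)
Definition gauss_seq (x : R) (n : nat) : R :=
  INR (fact n) * Rpower (INR n) x / prod_shift x n.

Definition Gamma (x : R) : R :=
  epsilon (inhabits 0) (fun g => Un_cv (gauss_seq x) g).

Fixpoint poch (g : R) (k : nat) : R :=
  match k with
  | O => 1
  | S j => poch g j * (g + INR j)
  end.

Definition ML3 (a b g x : R) : R :=
  sum_inf (fun k => poch g k * x ^ k / (Gamma (a * INR k + b) * INR (fact k))).

Definition phi (a t : R) : R := Rpower t (a - 1) * ML3 a a 1 (- Rpower t a).

Definition Pnal (a : R) (l n : nat) (t : R) : R :=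
  poch (INR l) n / INR (fact n) * Rpower t ((INR n + INR l) * a - 1)
  * ML3 a ((INR n + INR l) * a) (INR n + INR l) (- Rpower t a).

Definition m_al (a : R) (l : nat) (t : R) : R :=
  sum_inf (fun n => INR n * Pnal a l n t).

Definition improper_integral (f : R -> R) (a b v : R) : Prop :=
  (forall c d, a < c -> c <= d -> d < b -> inhabited (Riemann_integrable f c d)) /\
  (forall eps, eps > 0 -> exists delta, delta > 0 /\
     forall c d (pr : Riemann_integrable f c d),
       a < c < a + delta -> b - delta < d < b -> c <= d ->
       Rabs (RiemannInt pr - v) < eps).

From Stdlib Require Import Reals Lra Lia Factorial ClassicalEpsilon Classical ZArith.
From Coquelicot Require Import Coquelicot.
Open Scope R_scope.

(* Expanding each [E^{n+l}] in [m = sum_n n P_n] gives a double series whose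
   coefficient depends only on [j = n + k], up to the weight [n (-1)^k / (n! k!)].
   Summed along the diagonals [n + k = j] these weights vanish except for [j = 1],
   which leaves [m(t) = l t^((l+1)a-1) / Gamma((l+1)a)].  The [k]-derivative of the
   generating function at [0] only sees the linear Mittag-Leffler coefficient.

   For the renewal equation, [phi] is integrated termwise against [(t-u)^(p-1)].
   The Beta integral, evaluated through the Gauss products as
   [t^(p+q-1) Gamma p Gamma q / Gamma (p+q)], turns [I^p phi] into the alternating
   series of [t^(p+a+ak-1) / Gamma(p+a+ak)]; for [p = a l] and [p = a l + a] the two
   series are shifts of each other, so they telescope to [m(t) / l]. *)

Lemma INR_S_pos n : 0 < INR (S n).
Proof. apply lt_0_INR; lia. Qed.

Lemma exp_le_compat x y : x <= y -> exp x <= exp y.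
Proof. intros [H | ->]; [left; apply exp_increasing|]; lra. Qed.

Lemma ln_le_pred y : 0 < y -> ln y <= y - 1.
Proof. intros Hy. pose proof (exp_ineq1_le (ln y)). rewrite exp_ln in H; lra. Qed.

Lemma Rpower_pos x y : 0 < Rpower x y.
Proof. apply exp_pos. Qed.

Lemma Rpower_pred x e : 0 < x -> Rpower x e = Rpower x (e - 1) * x.
Proof. intros. replace e with ((e - 1) + 1) at 1 by ring. rewrite Rpower_plus, Rpower_1; auto. Qed.

Lemma Rpower_plus_INR_mult t e a j : 0 < t ->
  Rpower t (e + INR j * a) = Rpower t e * Rpower t a ^ j.
Proof.
  intros Ht. rewrite Rpower_plus, <- Rpower_pow by apply Rpower_pos.
  rewrite Rpower_mult, (Rmult_comm a). reflexivity.
Qed.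

Lemma nat_above (x : R) : exists n : nat, x <= INR n.
Proof.
  exists (Z.to_nat (up x)). destruct (archimed x) as [H _].
  destruct (Z_le_gt_dec 0 (up x)) as [h|h].
  - rewrite INR_IZR_INZ, Z2Nat.id by exact h. lra.
  - apply Z.gt_lt, IZR_lt in h. pose proof (pos_INR (Z.to_nat (up x))). lra.
Qed.

(** * The Gamma function *)

Lemma prod_shift_pos x n : 0 < x -> 0 < prod_shift x n.
Proof.
  intros Hx; induction n; cbn [prod_shift]; auto.
  apply Rmult_lt_0_compat; auto. pose proof (pos_INR (S n)); lra.
Qed.

Lemma prod_shift_succ x n : prod_shift (x + 1) n * x = prod_shift x (S n).
Proof.
  induction n.
  - cbn [prod_shift]. simpl INR. ring.
  - change (prod_shift x (S (S n))) with (prod_shift x (S n) * (x + INR (S (S n)))).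
    rewrite <- IHn. cbn [prod_shift]. rewrite !S_INR. ring.
Qed.

Lemma is_lim_seq_INR_frac x : 0 <= x -> is_lim_seq (fun n => INR n / (x + INR (S n))) 1.
Proof.
  intros Hx.
  apply is_lim_seq_ext with (fun n => 1 - (x + 1) * / (x + 1 + INR n)).
  { intros n. pose proof (pos_INR n). rewrite S_INR. field. lra. }
  assert (H : is_lim_seq (fun n => / (x + 1 + INR n)) 0).
  { replace (Finite 0) with (Rbar_inv p_infty) by auto.
    apply is_lim_seq_inv; [|discriminate].
    eapply is_lim_seq_plus; [apply is_lim_seq_const | apply is_lim_seq_INR | constructor]. }
  apply (is_lim_seq_scal_l _ (x + 1)) in H. simpl in H. rewrite Rmult_0_r in H.
  replace (Finite 1) with (Finite (1 - 0)) by (f_equal; ring).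
  apply is_lim_seq_minus'; [apply is_lim_seq_const | exact H].
Qed.

Section GaussSequence.
Variable x : R.
Hypothesis Hx : 0 < x.

Definition gauss_ratio (n : nat) : R :=
  INR (S n) * Rpower (INR (S n) / INR n) x / (x + INR (S n)).

Lemma gauss_seq_pos n : 0 < gauss_seq x n.
Proof.
  apply Rdiv_lt_0_compat; [|apply prod_shift_pos; auto].
  apply Rmult_lt_0_compat; [apply INR_fact_lt_0 | apply Rpower_pos].
Qed.

Lemma gauss_seq_1 : gauss_seq x 1 = / (x * (x + 1)).
Proof.
  unfold gauss_seq. simpl. unfold Rpower. rewrite ln_1, Rmult_0_r, exp_0. field. lra.
Qed.

Lemma gauss_seq_S n : (1 <= n)%nat -> gauss_seq x (S n) = gauss_seq x n * gauss_ratio n.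
Proof.
  intros Hn. unfold gauss_seq, gauss_ratio. cbn [prod_shift].
  rewrite fact_simpl, mult_INR.
  assert (Hn0 : 0 < INR n) by (apply lt_0_INR; lia).
  pose proof (INR_S_pos n). pose proof (prod_shift_pos x n Hx).
  replace (INR (S n)) with (INR n * (INR (S n) / INR n)) at 2 by (field; lra).
  rewrite <- Rpower_mult_distr by (try apply Rdiv_lt_0_compat; lra).
  field. lra.
Qed.

(* Both bounds come from [1 - 1/y <= ln y <= y - 1]. *)
Lemma gauss_ratio_ge_1 n : (1 <= n)%nat -> 1 <= gauss_ratio n.
Proof.
  intros Hn. unfold gauss_ratio.
  assert (Hn0 : 0 < INR n) by (apply lt_0_INR; lia).
  pose proof (INR_S_pos n) as HS. rewrite S_INR in *.
  assert (L : / (INR n + 1) <= ln ((INR n + 1) / INR n)).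
  { replace ((INR n + 1) / INR n) with (/ (INR n / (INR n + 1))) by (field; lra).
    rewrite ln_Rinv by (apply Rdiv_lt_0_compat; lra).
    pose proof (ln_le_pred (INR n / (INR n + 1)) ltac:(apply Rdiv_lt_0_compat; lra)).
    replace (INR n / (INR n + 1) - 1) with (- / (INR n + 1)) in H by (field; lra). lra. }
  assert (P : 1 + x / (INR n + 1) <= Rpower ((INR n + 1) / INR n) x).
  { eapply Rle_trans; [apply exp_ineq1_le|]. apply exp_le_compat.
    unfold Rdiv at 1. apply Rmult_le_compat_l; lra. }
  apply (Rmult_le_reg_r (x + (INR n + 1))); [lra|].
  replace (1 * (x + (INR n + 1))) with ((INR n + 1) * (1 + x / (INR n + 1))) by (field; lra).
  replace ((INR n + 1) * Rpower ((INR n + 1) / INR n) x / (x + (INR n + 1)) * (x + (INR n + 1)))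
    with ((INR n + 1) * Rpower ((INR n + 1) / INR n) x) by (field; lra).
  apply Rmult_le_compat_l; lra.
Qed.

Lemma gauss_ratio_le_exp n : (1 <= n)%nat ->
  gauss_ratio n <= exp (x * (1 + x) / (INR n * INR (S n))).
Proof.
  intros Hn. unfold gauss_ratio.
  assert (Hn0 : 0 < INR n) by (apply lt_0_INR; lia).
  pose proof (INR_S_pos n) as HS. rewrite S_INR in *.
  assert (L1 : ln ((INR n + 1) / INR n) <= / INR n).
  { pose proof (ln_le_pred ((INR n + 1) / INR n) ltac:(apply Rdiv_lt_0_compat; lra)).
    replace ((INR n + 1) / INR n - 1) with (/ INR n) in H by (field; lra). lra. }
  assert (L2 : x / (x + (INR n + 1)) <= ln ((x + (INR n + 1)) / (INR n + 1))).
  { replace ((x + (INR n + 1)) / (INR n + 1)) with (/ ((INR n + 1) / (x + (INR n + 1))))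
      by (field; lra).
    rewrite ln_Rinv by (apply Rdiv_lt_0_compat; lra).
    pose proof (ln_le_pred ((INR n + 1) / (x + (INR n + 1))) ltac:(apply Rdiv_lt_0_compat; lra)).
    replace ((INR n + 1) / (x + (INR n + 1)) - 1) with (- (x / (x + (INR n + 1)))) in H
      by (field; lra). lra. }
  replace ((INR n + 1) * Rpower ((INR n + 1) / INR n) x / (x + (INR n + 1)))
    with (exp (x * ln ((INR n + 1) / INR n) - ln ((x + (INR n + 1)) / (INR n + 1)))).
  2: { unfold Rminus. rewrite exp_plus, <- ln_Rinv, exp_ln by (try apply Rinv_0_lt_compat;
         apply Rdiv_lt_0_compat; lra). unfold Rpower. rewrite (Rmult_comm x). field. lra. }
  apply exp_le_compat.
  apply Rle_trans with (x * / INR n - x / (x + (INR n + 1))).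
  { assert (x * ln ((INR n + 1) / INR n) <= x * / INR n) by (apply Rmult_le_compat_l; lra). lra. }
  replace (x * / INR n - x / (x + (INR n + 1)))
    with (x * (1 + x) / (INR n * (x + (INR n + 1)))) by (field; lra).
  unfold Rdiv. apply Rmult_le_compat_l; [nra|]. apply Rinv_le_contravar; nra.
Qed.

Lemma gauss_seq_growing : Un_growing (fun m => gauss_seq x (S m)).
Proof.
  intros m. rewrite (gauss_seq_S (S m)) by lia.
  pose proof (gauss_ratio_ge_1 (S m) ltac:(lia)). pose proof (gauss_seq_pos (S m)).
  rewrite <- (Rmult_1_r (gauss_seq x (S m))) at 1. apply Rmult_le_compat_l; lra.
Qed.

(* The product of the ratios telescopes through [1/(n(n+1)) = 1/n - 1/(n+1)]. *)
Lemma gauss_seq_le m :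
  gauss_seq x (S m) <= gauss_seq x 1 * exp (x * (1 + x) * (1 - / INR (S m))).
Proof.
  induction m.
  - replace (1 - / INR 1) with 0 by (simpl; field). rewrite Rmult_0_r, exp_0. lra.
  - rewrite gauss_seq_S by lia.
    pose proof (gauss_ratio_le_exp (S m) ltac:(lia)).
    pose proof (gauss_ratio_ge_1 (S m) ltac:(lia)). pose proof (gauss_seq_pos (S m)).
    eapply Rle_trans; [apply Rmult_le_compat; [lra | lra | exact IHm | exact H]|].
    rewrite Rmult_assoc, <- exp_plus. right. do 2 f_equal.
    pose proof (INR_S_pos m). rewrite (S_INR (S m)). field. lra.
Qed.

Lemma gauss_seq_cv : exists g, Un_cv (gauss_seq x) g.
Proof.
  destruct (growing_cv _ gauss_seq_growing) as [g Hg].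
  - exists (gauss_seq x 1 * exp (x * (1 + x))). intros y [m ->].
    eapply Rle_trans; [apply gauss_seq_le|].
    apply Rmult_le_compat_l; [left; apply gauss_seq_pos|]. apply exp_le_compat.
    pose proof (Rinv_0_lt_compat _ (INR_S_pos m)). nra.
  - exists g. apply is_lim_seq_Reals, is_lim_seq_incr_1, is_lim_seq_Reals, Hg.
Qed.

End GaussSequence.

Lemma Gamma_cv x : 0 < x -> Un_cv (gauss_seq x) (Gamma x).
Proof. intros Hx. unfold Gamma. apply epsilon_spec, gauss_seq_cv, Hx. Qed.

Lemma Gamma_lower_bound x : 0 < x -> / (x * (x + 1)) <= Gamma x.
Proof.
  intros Hx. rewrite <- gauss_seq_1 by auto.
  assert (Hcv : Un_cv (fun m => gauss_seq x (S m)) (Gamma x)).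
  { apply is_lim_seq_Reals, (is_lim_seq_incr_1 (gauss_seq x)), is_lim_seq_Reals, Gamma_cv, Hx. }
  exact (growing_ineq _ _ (gauss_seq_growing x Hx) Hcv 0).
Qed.

Lemma Gamma_pos x : 0 < x -> 0 < Gamma x.
Proof.
  intros Hx. eapply Rlt_le_trans; [|apply Gamma_lower_bound; auto].
  apply Rinv_0_lt_compat. nra.
Qed.

Lemma gauss_seq_shift x n : 0 < x -> (1 <= n)%nat ->
  gauss_seq (x + 1) n = gauss_seq x n * (x * INR n / (x + INR (S n))).
Proof.
  intros Hx Hn. unfold gauss_seq.
  assert (Hn0 : 0 < INR n) by (apply lt_0_INR; lia).
  rewrite Rpower_plus, Rpower_1 by auto.
  replace (prod_shift (x + 1) n) with (prod_shift x (S n) / x)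
    by (rewrite <- prod_shift_succ; field; lra).
  cbn [prod_shift]. pose proof (prod_shift_pos x n Hx). pose proof (INR_S_pos n).
  field. repeat split; lra.
Qed.

Lemma Gamma_succ x : 0 < x -> Gamma (x + 1) = x * Gamma x.
Proof.
  intros Hx. apply (UL_sequence (fun n => gauss_seq (x + 1) (S n))).
  - apply is_lim_seq_Reals, (is_lim_seq_incr_1 (gauss_seq (x + 1))),
      is_lim_seq_Reals, Gamma_cv; lra.
  - apply is_lim_seq_Reals.
    apply is_lim_seq_ext
      with (fun n => gauss_seq x (S n) * (x * (INR (S n) / (x + INR (S (S n)))))).
    { intros n. rewrite gauss_seq_shift by (auto; lia). unfold Rdiv. ring. }
    replace (x * Gamma x) with (Gamma x * (x * 1)) by ring.
    apply is_lim_seq_mult'.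
    + apply (is_lim_seq_incr_1 (gauss_seq x)), is_lim_seq_Reals, Gamma_cv, Hx.
    + apply (is_lim_seq_scal_l _ _ (Finite 1)).
      apply (is_lim_seq_incr_1 (fun n => INR n / (x + INR (S n)))), is_lim_seq_INR_frac; lra.
Qed.

(* On a window of length one [Gamma] is bounded below by [Gamma_lower_bound];
   the functional equation then carries [rho^x <= K Gamma x] to the right. *)
Lemma Gamma_dominates_exponential rho x0 : 1 <= rho -> 0 < x0 ->
  exists K, 0 < K /\ forall x, x0 <= x -> Rpower rho x <= K * Gamma x.
Proof.
  intros Hr Hx0. destruct (nat_above rho) as [N HN].
  set (z := x0 + INR N + 1).
  pose proof (pos_INR N).
  set (K := Rpower rho z * (z * (z + 1))).
  assert (HK : 0 < K) by (apply Rmult_lt_0_compat; [apply Rpower_pos | unfold z; nra]).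
  exists K. split; auto.
  assert (base : forall x, x0 <= x <= z -> Rpower rho x <= K * Gamma x).
  { intros x Hx. pose proof (Gamma_lower_bound x ltac:(lra)).
    assert (/ (z * (z + 1)) <= / (x * (x + 1)))
      by (apply Rinv_le_contravar; [nra | apply Rmult_le_compat; lra]).
    assert (Hz : 1 <= z * (z + 1) * Gamma x).
    { apply (Rmult_le_reg_l (/ (z * (z + 1)))); [apply Rinv_0_lt_compat; unfold z; nra|].
      rewrite <- Rmult_assoc, Rinv_l, Rmult_1_l, Rmult_1_r by (unfold z; nra). lra. }
    unfold K. rewrite Rmult_assoc, <- (Rmult_1_r (Rpower rho x)).
    apply Rmult_le_compat; [left; apply Rpower_pos | lra | apply Rle_Rpower; lra | exact Hz]. }
  assert (ind : forall m x, x0 <= x <= z + INR m -> Rpower rho x <= K * Gamma x).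
  { induction m; intros x Hx.
    - apply base. simpl in Hx. lra.
    - destruct (Rle_dec x (z + INR m)) as [h|h]; [apply IHm; lra|].
      rewrite S_INR in Hx. pose proof (pos_INR m).
      pose proof (IHm (x - 1) ltac:(unfold z in *; lra)).
      replace x with ((x - 1) + 1) by ring.
      rewrite Gamma_succ, Rpower_plus, Rpower_1 by (unfold z in *; lra).
      assert (Hr1 : rho <= x - 1) by (unfold z in *; lra).
      pose proof (Rpower_pos rho (x - 1)).
      apply Rle_trans with (Rpower rho (x - 1) * (x - 1)); [apply Rmult_le_compat_l|]; nra. }
  intros x Hx. destruct (nat_above x) as [m Hm]. apply (ind m). unfold z. lra.
Qed.

Lemma Gamma_inv_geometric a b Y : 0 < a -> 0 < b -> 0 <= Y ->
  exists C, 0 <= C /\ forall k, Y ^ k / Gamma (a * INR k + b) <= C * (/ 2) ^ k.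
Proof.
  intros Ha Hb HY.
  set (rho := Rpower (2 * Y + 1) (/ a)).
  assert (Hrho : 1 <= rho).
  { rewrite <- (Rpower_O (2 * Y + 1)) by lra. apply Rle_Rpower; [lra|].
    left; apply Rinv_0_lt_compat; auto. }
  assert (Hra : Rpower rho a = 2 * Y + 1).
  { unfold rho. rewrite Rpower_mult, Rinv_l, Rpower_1; lra. }
  destruct (Gamma_dominates_exponential rho b Hrho Hb) as [K [HK HG]].
  pose proof (Rpower_pos rho b).
  exists (K / Rpower rho b). split; [left; apply Rdiv_lt_0_compat; auto|]. intros k.
  assert (Hk : b <= a * INR k + b) by (pose proof (pos_INR k); nra).
  specialize (HG _ Hk).
  pose proof (Gamma_pos _ (Rlt_le_trans _ _ _ Hb Hk)).
  rewrite Rpower_plus, <- Rpower_mult, Hra, Rpower_pow in HG by lra.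
  assert (Hpow : Y ^ k * 2 ^ k <= (2 * Y + 1) ^ k)
    by (rewrite <- Rpow_mult_distr; apply pow_incr; nra).
  pose proof (pow_lt 2 k ltac:(lra)). pose proof (pow_lt (2 * Y + 1) k ltac:(lra)).
  rewrite pow_inv.
  apply (Rmult_le_reg_r (Gamma (a * INR k + b) * Rpower rho b * 2 ^ k));
    [repeat apply Rmult_lt_0_compat; auto|].
  replace (Y ^ k / Gamma (a * INR k + b) * (Gamma (a * INR k + b) * Rpower rho b * 2 ^ k))
    with (Rpower rho b * (Y ^ k * 2 ^ k)) by (field; lra).
  replace (K / Rpower rho b * / 2 ^ k * (Gamma (a * INR k + b) * Rpower rho b * 2 ^ k))
    with (K * Gamma (a * INR k + b)) by (field; lra).
  eapply Rle_trans; [|exact HG]. rewrite Rmult_comm. apply Rmult_le_compat_r; lra.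
Qed.

(** * Summation of series *)

Lemma sum_inf_eq f l : infinite_sum f l -> sum_inf f = l.
Proof.
  intros H. apply (uniqueness_sum f); auto.
  unfold sum_inf. apply epsilon_spec. exists l; auto.
Qed.

Lemma infinite_sum_scal_l f c l : infinite_sum f l -> infinite_sum (fun n => c * f n) (c * l).
Proof.
  intros H. apply is_series_Reals in H. apply is_series_Reals.
  exact (@is_series_scal_l R_AbsRing R_NormedModule c f l H).
Qed.

Lemma infinite_sum_geom_half : infinite_sum (fun n => (/ 2) ^ n) 2.
Proof.
  apply is_series_Reals.
  assert (H := is_series_geom (/ 2) ltac:(rewrite Rabs_pos_eq; lra)).
  replace (/ (1 - / 2)) with 2 in H by field. exact H.
Qed.

Lemma sum_f_R0_tail_bound (f g : nat -> R) lf lg m :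
  (forall k, Rabs (f k) <= g k) -> infinite_sum f lf -> infinite_sum g lg ->
  Rabs (lf - sum_f_R0 f m) <= lg - sum_f_R0 g m.
Proof.
  intros Hfg Hf Hg.
  assert (Hdiff : forall K, (m <= K)%nat ->
    Rabs (sum_f_R0 f K - sum_f_R0 f m) <= sum_f_R0 g K - sum_f_R0 g m).
  { intros K HK. induction HK.
    - rewrite !Rminus_diag, Rabs_R0. lra.
    - rewrite !tech5. specialize (Hfg (S m0)).
      replace (sum_f_R0 f m0 + f (S m0) - sum_f_R0 f m)
        with ((sum_f_R0 f m0 - sum_f_R0 f m) + f (S m0)) by ring.
      eapply Rle_trans; [apply Rabs_triang|]. lra. }
  apply Rnot_lt_le. intros Hc.
  set (e := (Rabs (lf - sum_f_R0 f m) - (lg - sum_f_R0 g m)) / 3).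
  destruct (Hf e ltac:(unfold e; lra)) as [N1 H1]. destruct (Hg e ltac:(unfold e; lra)) as [N2 H2].
  set (K := max m (max N1 N2)).
  specialize (H1 K ltac:(unfold K; lia)). specialize (H2 K ltac:(unfold K; lia)).
  specialize (Hdiff K ltac:(unfold K; lia)). unfold Rdist in H1, H2.
  assert (Rabs (lf - sum_f_R0 f m)
          <= Rabs (sum_f_R0 f K - lf) + Rabs (sum_f_R0 f K - sum_f_R0 f m)).
  { replace (lf - sum_f_R0 f m) with (- (sum_f_R0 f K - lf) + (sum_f_R0 f K - sum_f_R0 f m))
      by ring.
    eapply Rle_trans; [apply Rabs_triang|]. rewrite Rabs_Ropp. lra. }
  apply Rabs_def2 in H2. unfold e in *. lra.
Qed.

Lemma sum_f_R0_triangle (c : nat -> nat -> R) N :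
  sum_f_R0 (fun j => sum_f_R0 (fun n => c n (j - n)%nat) j) N
  = sum_f_R0 (fun n => sum_f_R0 (c n) (N - n)%nat) N.
Proof.
  induction N; [reflexivity|].
  rewrite tech5, IHN, (tech5 (fun n => sum_f_R0 (c n) (S N - n))),
    (tech5 (fun n => c n (S N - n)%nat)), Nat.sub_diag.
  rewrite (sum_eq (fun n => sum_f_R0 (c n) (S N - n))
             (fun n => sum_f_R0 (c n) (N - n) + c n (S N - n)%nat)).
  - rewrite sum_plus. simpl. ring.
  - intros i Hi. replace (S N - i)%nat with (S (N - i)) by lia. apply tech5.
Qed.

Lemma sum_f_R0_drop_prefix (u : nat -> R) M N : (M <= N)%nat ->
  sum_f_R0 (fun n => if Nat.leb n M then 0 else u n) N = sum_f_R0 u N - sum_f_R0 u M.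
Proof.
  intros H. induction H.
  - rewrite (sum_eq _ (fun _ => 0)), sum_cte; [ring|].
    intros i Hi. rewrite (proj2 (Nat.leb_le i M) Hi). reflexivity.
  - rewrite !tech5, IHle, (proj2 (Nat.leb_gt (S m) M)) by lia. ring.
Qed.

Lemma convolution_null (u w : nat -> R) U B :
  (forall n, 0 <= u n) -> infinite_sum u U -> (forall m, 0 <= w m <= B) -> Un_cv w 0 ->
  Un_cv (fun N => sum_f_R0 (fun n => u n * w (N - n)%nat) N) 0.
Proof.
  intros Hu HU Hw Hw0 eps Heps.
  assert (HB : 0 <= B) by (specialize (Hw 0%nat); lra).
  assert (HU0 : 0 <= U) by (apply (Rle_trans _ (sum_f_R0 u 0)); [apply cond_pos_sum | apply sum_incr]; auto).
  set (e := eps / (2 * (U + B + 1))).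
  assert (He : 0 < e) by (apply Rdiv_lt_0_compat; lra).
  destruct (HU e He) as [M HM]. destruct (Hw0 e He) as [K HK].
  exists (M + K)%nat. intros N HN. unfold Rdist. rewrite Rminus_0_r.
  rewrite Rabs_pos_eq by (apply cond_pos_sum; intros n; apply Rmult_le_pos; [apply Hu | apply Hw]).
  apply Rle_lt_trans with (sum_f_R0 (fun n => e * u n + B * (if Nat.leb n M then 0 else u n)) N).
  - apply sum_Rle. intros n Hn. pose proof (Hu n). pose proof (Hw (N - n)%nat).
    destruct (Nat.leb n M) eqn:E.
    + apply Nat.leb_le in E. specialize (HK (N - n)%nat ltac:(lia)).
      unfold Rdist in HK. rewrite Rminus_0_r, Rabs_pos_eq in HK by lra. nra.
    + nra.
  - replace (sum_f_R0 _ N) with (e * sum_f_R0 u N + B * (sum_f_R0 u N - sum_f_R0 u M)).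
    2: { rewrite sum_plus, <- sum_f_R0_drop_prefix, !scal_sum by lia.
         f_equal; apply sum_eq; intros; ring. }
    pose proof (sum_incr u N U HU Hu). specialize (HM M ltac:(lia)).
    unfold Rdist in HM. apply Rabs_def2 in HM.
    assert (e * U + B * e < eps) by (unfold e; apply (Rmult_lt_reg_r (2 * (U + B + 1))); [lra|];
      field_simplify; nra).
    assert (e * sum_f_R0 u N <= e * U) by (apply Rmult_le_compat_l; lra).
    assert (B * (sum_f_R0 u N - sum_f_R0 u M) <= B * e) by (apply Rmult_le_compat_l; lra).
    lra.
Qed.

Lemma infinite_sum_by_diagonals (c : nat -> nat -> R) (u v r : nat -> R) U V L :
  (forall n, 0 <= u n) -> (forall k, 0 <= v k) ->
  infinite_sum u U -> infinite_sum v V ->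
  (forall n k, Rabs (c n k) <= u n * v k) ->
  (forall n, infinite_sum (c n) (r n)) ->
  infinite_sum (fun j => sum_f_R0 (fun n => c n (j - n)%nat) j) L ->
  infinite_sum r L.
Proof.
  intros Hu Hv HU HV Hc Hr HD.
  set (tail m := V - sum_f_R0 v m).
  assert (Htail : forall m, 0 <= tail m <= V).
  { intros m. pose proof (sum_incr v m V HV Hv). pose proof (cond_pos_sum v m Hv).
    unfold tail. lra. }
  assert (Htail0 : Un_cv tail 0).
  { intros e He. destruct (HV e He) as [K HK]. exists K. intros m Hm. specialize (HK m Hm).
    unfold Rdist, tail in *. rewrite Rminus_0_r, Rabs_minus_sym. exact HK. }
  assert (Hrow : forall n m, Rabs (r n - sum_f_R0 (c n) m) <= u n * tail m).
  { intros n m. unfold tail. rewrite Rmult_minus_distr_l, scal_sum.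
    replace (sum_f_R0 (fun i => v i * u n) m) with (sum_f_R0 (fun k => u n * v k) m)
      by (apply sum_eq; intros; ring).
    apply sum_f_R0_tail_bound; auto. apply infinite_sum_scal_l, HV. }
  pose proof (convolution_null u tail U V Hu HU Htail Htail0) as Hconv.
  intros eps Heps.
  destruct (Hconv (eps / 2) ltac:(lra)) as [N1 H1]. destruct (HD (eps / 2) ltac:(lra)) as [N2 H2].
  exists (max N1 N2). intros N HN.
  specialize (H1 N ltac:(lia)). specialize (H2 N ltac:(lia)).
  unfold Rdist in *. rewrite Rminus_0_r, sum_f_R0_triangle in *.
  assert (Hclose : Rabs (sum_f_R0 r N - sum_f_R0 (fun n => sum_f_R0 (c n) (N - n)) N)
                   <= sum_f_R0 (fun n => u n * tail (N - n)%nat) N).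
  { rewrite <- minus_sum. eapply Rle_trans; [apply Rsum_abs|].
    apply sum_Rle. intros n _. apply Hrow. }
  pose proof (Rle_abs (sum_f_R0 (fun n => u n * tail (N - n)%nat) N)).
  replace (sum_f_R0 r N - L)
    with ((sum_f_R0 r N - sum_f_R0 (fun n => sum_f_R0 (c n) (N - n)) N)
          + (sum_f_R0 (fun n => sum_f_R0 (c n) (N - n)) N - L)) by ring.
  eapply Rle_lt_trans; [apply Rabs_triang|]. lra.
Qed.

(** * Mittag-Leffler series *)

Lemma poch_nonneg g k : 0 <= g -> 0 <= poch g k.
Proof. intros Hg; induction k; simpl; [lra|]. pose proof (pos_INR k). nra. Qed.

Lemma poch_add g n k : poch g (n + k) = poch g n * poch (g + INR n) k.
Proof.
  induction k.
  - rewrite Nat.add_0_r. simpl. ring.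
  - rewrite Nat.add_succ_r. cbn [poch]. rewrite IHk, plus_INR. ring.
Qed.

Lemma poch_1 k : poch 1 k = INR (fact k).
Proof. induction k; simpl poch; [reflexivity|]. rewrite IHk, fact_simpl, mult_INR, S_INR. ring. Qed.

Lemma poch_le_pow_fact g k : 0 <= g -> poch g k <= (g + 1) ^ k * INR (fact k).
Proof.
  intros Hg. induction k; [simpl; lra|].
  cbn [poch pow]. rewrite fact_simpl, mult_INR, S_INR.
  pose proof (pos_INR k). pose proof (poch_nonneg g k Hg).
  apply Rle_trans with ((g + 1) ^ k * INR (fact k) * (g + INR k)); [apply Rmult_le_compat_r; lra|].
  pose proof (pow_le (g + 1) k ltac:(lra)). pose proof (INR_fact_lt_0 k).
  assert (0 <= (g + 1) ^ k * INR (fact k)) by (apply Rmult_le_pos; lra).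
  replace ((g + 1) * (g + 1) ^ k * ((INR k + 1) * INR (fact k)))
    with ((g + 1) ^ k * INR (fact k) * ((g + 1) * (INR k + 1))) by ring.
  apply Rmult_le_compat_l; nra.
Qed.

Definition ml_coef (a b g : R) (k : nat) : R :=
  poch g k / (Gamma (a * INR k + b) * INR (fact k)).

Section MittagLeffler.
Variables a b g : R.
Hypotheses (Ha : 0 < a) (Hb : 0 < b) (Hg : 0 <= g).

Lemma Gamma_ml_pos k : 0 < Gamma (a * INR k + b).
Proof. apply Gamma_pos. pose proof (pos_INR k). nra. Qed.

Lemma ml_coef_nonneg k : 0 <= ml_coef a b g k.
Proof.
  apply Rmult_le_pos; [apply poch_nonneg; auto|]. left. apply Rinv_0_lt_compat.
  apply Rmult_lt_0_compat; [apply Gamma_ml_pos | apply INR_fact_lt_0].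
Qed.

Lemma ml_coef_geometric X : 0 <= X ->
  exists C, 0 <= C /\ forall k, ml_coef a b g k * X ^ k <= C * (/ 2) ^ k.
Proof.
  intros HX.
  destruct (Gamma_inv_geometric a b ((g + 1) * X) Ha Hb ltac:(nra)) as [C [HC HCb]].
  exists C. split; auto. intros k. eapply Rle_trans; [|apply HCb].
  pose proof (Gamma_ml_pos k). pose proof (INR_fact_lt_0 k).
  pose proof (poch_le_pow_fact g k Hg). pose proof (pow_le X k HX).
  unfold ml_coef. rewrite Rpow_mult_distr.
  replace (poch g k / (Gamma (a * INR k + b) * INR (fact k)) * X ^ k)
    with (poch g k * (X ^ k / (Gamma (a * INR k + b) * INR (fact k)))) by (field; lra).
  replace ((g + 1) ^ k * X ^ k / Gamma (a * INR k + b))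
    with ((g + 1) ^ k * INR (fact k) * (X ^ k / (Gamma (a * INR k + b) * INR (fact k))))
    by (field; lra).
  apply Rmult_le_compat_r; auto.
  apply Rmult_le_pos; [lra | left; apply Rinv_0_lt_compat, Rmult_lt_0_compat; lra].
Qed.

Lemma ml_radius x : Rbar_lt (Rabs x) (CV_radius (ml_coef a b g)).
Proof.
  destruct (CV_radius_bounded (ml_coef a b g)) as [Hub _].
  apply Rbar_lt_le_trans with (Rabs x + 1); [simpl; lra|]. apply Hub.
  pose proof (Rabs_pos x).
  destruct (ml_coef_geometric (Rabs x + 1) ltac:(lra)) as [C [HC HCb]].
  exists C. intros k.
  rewrite Rabs_mult, <- RPow_abs, (Rabs_pos_eq (ml_coef a b g k)), (Rabs_pos_eq (Rabs x + 1))
    by (try apply ml_coef_nonneg; lra).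
  eapply Rle_trans; [apply HCb|]. rewrite <- (Rmult_1_r C) at 2.
  apply Rmult_le_compat_l; auto. rewrite <- (pow1 k). apply pow_incr. lra.
Qed.

Lemma ML3_is_series x : is_series (fun k => ml_coef a b g k * x ^ k) (ML3 a b g x).
Proof.
  assert (Hex : ex_series (fun k => ml_coef a b g k * x ^ k))
    by (destruct (CV_radius_inside _ _ (ml_radius x)) as [l Hl];
        exists l; apply is_pseries_R, Hl).
  unfold ML3. rewrite (sum_inf_eq _ (Series (fun k => ml_coef a b g k * x ^ k))).
  - apply Series_correct, Hex.
  - apply is_series_Reals.
    apply (is_series_ext (fun k => ml_coef a b g k * x ^ k)); [|apply Series_correct, Hex].
    intros k. change (ml_coef a b g k * x ^ k = poch g k * x ^ k / (Gamma (a * INR k + b) * INR (fact k))).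
    unfold ml_coef. pose proof (Gamma_ml_pos k). pose proof (INR_fact_lt_0 k).
    field. lra.
Qed.

Lemma ML3_PSeries x : ML3 a b g x = PSeries (ml_coef a b g) x.
Proof. symmetry. apply is_series_unique, ML3_is_series. Qed.

End MittagLeffler.

(** * Closed form of the mean *)

Lemma sum_f_R0_term_le (f : nat -> R) i N :
  (i <= N)%nat -> (forall n, 0 <= f n) -> f i <= sum_f_R0 f N.
Proof.
  intros H Hf. induction H.
  - destruct i; [simpl; lra|]. rewrite tech5. pose proof (cond_pos_sum f i Hf). lra.
  - rewrite tech5. specialize (Hf (S m)). lra.
Qed.

Lemma binomial_le_pow2 N i : (i <= N)%nat -> Binomial.C N i <= 2 ^ N.
Proof.
  intros H. replace 2 with (1 + 1) by ring. rewrite binomial.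
  rewrite (sum_eq _ (Binomial.C N)) by (intros; rewrite !pow1; ring).
  apply sum_f_R0_term_le; auto. intros n. unfold Binomial.C.
  pose proof (INR_fact_lt_0 N). pose proof (INR_fact_lt_0 n). pose proof (INR_fact_lt_0 (N - n)).
  apply Rmult_le_pos; [lra | left; apply Rinv_0_lt_compat, Rmult_lt_0_compat; lra].
Qed.

Lemma INR_div_fact_fact_le n k :
  INR n / (INR (fact n) * INR (fact k)) <= 4 ^ (n + k) / INR (fact (n + k)).
Proof.
  pose proof (binomial_le_pow2 (n + k) n ltac:(lia)) as HC. unfold Binomial.C in HC.
  replace (n + k - n)%nat with k in HC by lia.
  assert (Hn : INR n <= 2 ^ (n + k)).
  { apply Rle_trans with (2 ^ n); [|apply Rle_pow; [lra | lia]].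
    clear. induction n; [simpl; lra|]. rewrite S_INR. simpl.
    assert (1 <= 2 ^ n) by (clear; induction n; simpl; lra). lra. }
  pose proof (INR_fact_lt_0 n). pose proof (INR_fact_lt_0 k). pose proof (INR_fact_lt_0 (n + k)).
  replace (INR n / (INR (fact n) * INR (fact k)))
    with (INR n * (INR (fact (n + k)) / (INR (fact n) * INR (fact k))) / INR (fact (n + k)))
    by (field; lra).
  replace 4 with (2 * 2) by ring. rewrite Rpow_mult_distr.
  unfold Rdiv. apply Rmult_le_compat_r; [left; apply Rinv_0_lt_compat; lra|].
  apply Rmult_le_compat; auto using pos_INR.
  apply Rmult_le_pos; [lra | left; apply Rinv_0_lt_compat, Rmult_lt_0_compat; lra].
Qed.

(* [sum_n n (-1)^(j-n) / (n! (j-n)!) = (1 - 1)^(j-1) / (j-1)!]. *)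
Lemma sum_weighted_alternating_binomial j :
  sum_f_R0 (fun n => INR n * (-1) ^ (j - n) / (INR (fact n) * INR (fact (j - n)))) j
  = if Nat.eqb j 1 then 1 else 0.
Proof.
  destruct j; [simpl; field|].
  rewrite decomp_sum by lia. simpl pred.
  rewrite (sum_eq _ (fun m => Binomial.C j m * 1 ^ m * (-1) ^ (j - m) * / INR (fact j))).
  2: { intros m Hm. replace (S j - S m)%nat with (j - m)%nat by lia. unfold Binomial.C.
       rewrite fact_simpl, mult_INR, pow1.
       pose proof (INR_fact_lt_0 m). pose proof (INR_fact_lt_0 j).
       pose proof (INR_fact_lt_0 (j - m)). pose proof (INR_S_pos m).
       field. repeat split; lra. }
  rewrite <- scal_sum, <- binomial, Rplus_opp_r.
  simpl (INR 0 * _). rewrite Rmult_0_l, Rdiv_0_l, Rplus_0_l.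
  destruct j; [simpl; field|]. rewrite pow_i by lia. simpl. ring.
Qed.

Section Mean.
Variables (a : R) (l : nat) (t : R).
Hypotheses (Ha : 0 < a) (Hl : (1 <= l)%nat) (Ht : 0 < t).

Let Hl0 : 0 < INR l.
Proof. apply lt_0_INR; lia. Qed.

(* Expanding [E^{n+l}] inside [n P_n] gives the double series [m_term n k];
   its coefficient depends on [n] and [k] only through [j = n + k] up to
   the weight [n (-1)^k / (n! k!)]. *)
Definition m_coef (j : nat) : R :=
  Rpower t ((INR j + INR l) * a - 1) * poch (INR l) j / Gamma (a * INR j + a * INR l).

Definition m_term (n k : nat) : R :=
  INR n * (poch (INR l) n / INR (fact n) * Rpower t ((INR n + INR l) * a - 1))
  * (ml_coef a ((INR n + INR l) * a) (INR n + INR l) k * (- Rpower t a) ^ k).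

Lemma Gamma_m_pos j : 0 < Gamma (a * INR j + a * INR l).
Proof. apply Gamma_pos. pose proof (pos_INR j). nra. Qed.

Lemma m_term_eq n k :
  m_term n k = m_coef (n + k) * (INR n * (-1) ^ k / (INR (fact n) * INR (fact k))).
Proof.
  unfold m_term, m_coef, ml_coef. rewrite poch_add.
  replace ((INR (n + k) + INR l) * a - 1) with (((INR n + INR l) * a - 1) + INR k * a)
    by (rewrite plus_INR; ring).
  replace (a * INR (n + k) + a * INR l) with (a * INR k + (INR n + INR l) * a)
    by (rewrite plus_INR; ring).
  rewrite Rpower_plus_INR_mult, (Rplus_comm (INR l) (INR n)) by auto.
  replace (- Rpower t a) with ((-1) * Rpower t a) by ring. rewrite Rpow_mult_distr.
  pose proof (INR_fact_lt_0 n). pose proof (INR_fact_lt_0 k).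
  pose proof (Gamma_m_pos (n + k)). rewrite plus_INR in H1.
  replace (a * (INR n + INR k) + a * INR l) with (a * INR k + (INR n + INR l) * a) in H1 by ring.
  field. lra.
Qed.

Lemma m_term_abs_le n k :
  Rabs (m_term n k) <= Rpower t (INR l * a - 1)
    * ((4 * (INR l + 1) * Rpower t a) ^ (n + k) / Gamma (a * INR (n + k) + a * INR l)).
Proof.
  rewrite m_term_eq. set (j := (n + k)%nat).
  pose proof (INR_fact_lt_0 n). pose proof (INR_fact_lt_0 k). pose proof (INR_fact_lt_0 j).
  pose proof (Gamma_m_pos j). pose proof (pos_INR n).
  pose proof (poch_nonneg (INR l) j ltac:(lra)). pose proof (poch_le_pow_fact (INR l) j ltac:(lra)).
  pose proof (INR_div_fact_fact_le n k) as Hnk. fold j in Hnk.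
  pose proof (Rpower_pos t (INR l * a - 1)). pose proof (pow_le (Rpower t a) j (Rlt_le _ _ (Rpower_pos t a))).
  unfold m_coef. replace ((INR j + INR l) * a - 1) with ((INR l * a - 1) + INR j * a) by ring.
  rewrite Rpower_plus_INR_mult by auto.
  rewrite Rabs_mult, Rabs_pos_eq.
  2: { apply Rmult_le_pos; [apply Rmult_le_pos|]; try apply Rmult_le_pos; try lra.
       left; apply Rinv_0_lt_compat; lra. }
  replace (Rabs (INR n * (-1) ^ k / (INR (fact n) * INR (fact k))))
    with (INR n / (INR (fact n) * INR (fact k))).
  2: { unfold Rdiv. rewrite !Rabs_mult, pow_1_abs, (Rabs_pos_eq (INR n)) by lra.
       rewrite Rabs_pos_eq; [ring|]. left; apply Rinv_0_lt_compat, Rmult_lt_0_compat; lra. }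
  rewrite !Rpow_mult_distr.
  replace (Rpower t (INR l * a - 1) * Rpower t a ^ j * poch (INR l) j / Gamma (a * INR j + a * INR l)
           * (INR n / (INR (fact n) * INR (fact k))))
    with (Rpower t (INR l * a - 1) * Rpower t a ^ j / Gamma (a * INR j + a * INR l)
           * (poch (INR l) j * (INR n / (INR (fact n) * INR (fact k))))) by (field; nra).
  replace (Rpower t (INR l * a - 1) * (4 ^ j * (INR l + 1) ^ j * Rpower t a ^ j
           / Gamma (a * INR j + a * INR l)))
    with (Rpower t (INR l * a - 1) * Rpower t a ^ j / Gamma (a * INR j + a * INR l)
           * ((INR l + 1) ^ j * INR (fact j) * (4 ^ j / INR (fact j)))) by (field; lra).
  apply Rmult_le_compat_l.
  { apply Rmult_le_pos; [nra | left; apply Rinv_0_lt_compat; lra]. }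
  apply Rmult_le_compat; auto.
  apply Rmult_le_pos; [lra | left; apply Rinv_0_lt_compat; nra].
Qed.

Lemma m_term_geometric : exists C, 0 <= C /\ forall n k,
  Rabs (m_term n k) <= (C * (/ 2) ^ n) * (/ 2) ^ k.
Proof.
  pose proof (Rpower_pos t (INR l * a - 1)). pose proof (Rpower_pos t a).
  destruct (Gamma_inv_geometric a (a * INR l) (4 * (INR l + 1) * Rpower t a) Ha ltac:(nra)
             ltac:(nra)) as [C [HC HCb]].
  exists (Rpower t (INR l * a - 1) * C). split; [nra|]. intros n k.
  eapply Rle_trans; [apply m_term_abs_le|].
  replace (Rpower t (INR l * a - 1) * C * (/ 2) ^ n * (/ 2) ^ k)
    with (Rpower t (INR l * a - 1) * (C * (/ 2) ^ (n + k))) by (rewrite pow_add; ring).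
  apply Rmult_le_compat_l; [lra | apply HCb].
Qed.

Lemma m_coef_1 : m_coef 1 = INR l * Rpower t (INR l * a + a - 1) / Gamma ((INR l + 1) * a).
Proof.
  unfold m_coef. simpl poch. simpl INR.
  replace ((1 + INR l) * a - 1) with (INR l * a + a - 1) by ring.
  replace (a * 1 + a * INR l) with ((INR l + 1) * a) by ring. unfold Rdiv. ring.
Qed.

Lemma infinite_sum_m_diagonals :
  infinite_sum (fun j => sum_f_R0 (fun n => m_term n (j - n)) j) (m_coef 1).
Proof.
  assert (Hdiag : forall j, sum_f_R0 (fun n => m_term n (j - n)) j
                            = if Nat.eqb j 1 then m_coef 1 else 0).
  { intros j. rewrite (sum_eq _ (fun n => (INR n * (-1) ^ (j - n)
                 / (INR (fact n) * INR (fact (j - n)))) * m_coef j)).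
    - rewrite <- scal_sum, sum_weighted_alternating_binomial.
      destruct (Nat.eqb j 1) eqn:E; [apply Nat.eqb_eq in E; subst|]; ring.
    - intros n Hn. rewrite m_term_eq. replace (n + (j - n))%nat with j by lia. ring. }
  assert (Hsum : forall N, (1 <= N)%nat ->
            sum_f_R0 (fun j => if Nat.eqb j 1 then m_coef 1 else 0) N = m_coef 1).
  { intros N HN. induction HN; [simpl; ring|].
    rewrite tech5, IHHN, (proj2 (Nat.eqb_neq (S m) 1)) by lia. ring. }
  intros e He. exists 1%nat. intros N HN. unfold Rdist.
  rewrite (sum_eq _ _ _ (fun j _ => Hdiag j)), Hsum, Rminus_diag, Rabs_R0; lia || lra.
Qed.

Lemma infinite_sum_m_row n : infinite_sum (m_term n) (INR n * Pnal a l n t).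
Proof.
  apply is_series_Reals. unfold m_term, Pnal. pose proof (pos_INR n).
  rewrite <- (Rmult_assoc (INR n) _ (ML3 _ _ _ _)).
  apply (@is_series_scal_l R_AbsRing R_NormedModule), ML3_is_series; nra.
Qed.

Theorem infinite_sum_m_al :
  infinite_sum (fun n => INR n * Pnal a l n t)
    (INR l * Rpower t (INR l * a + a - 1) / Gamma ((INR l + 1) * a)).
Proof.
  rewrite <- m_coef_1. destruct m_term_geometric as [C [HC Hb]].
  pose proof infinite_sum_geom_half as Hg.
  apply (infinite_sum_by_diagonals m_term (fun n => C * (/ 2) ^ n) (fun k => (/ 2) ^ k) _ (C * 2) 2).
  - intros n. apply Rmult_le_pos; [lra | apply pow_le; lra].
  - intros k. apply pow_le; lra.
  - apply infinite_sum_scal_l, Hg.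
  - exact Hg.
  - exact Hb.
  - exact infinite_sum_m_row.
  - exact infinite_sum_m_diagonals.
Qed.

Corollary m_al_closed_form :
  m_al a l t = INR l * Rpower t (INR l * a + a - 1) / Gamma ((INR l + 1) * a).
Proof. apply sum_inf_eq, infinite_sum_m_al. Qed.


(* At [k = 0] the argument [-(1 - e^{-k}) t^a] vanishes with derivative
   [-t^a], so only the linear coefficient of the power series survives. *)
Theorem derivable_pt_lim_m_generating :
  derivable_pt_lim
    (fun k => Rpower t (a * INR l - 1)
              * ML3 a (a * INR l) (INR l) (- (1 - exp (- k)) * Rpower t a))
    0 (- m_al a l t).
Proof.
  rewrite m_al_closed_form. apply is_derive_Reals.
  set (A := ml_coef a (a * INR l) (INR l)). set (T := Rpower t a).
  set (h k := - (1 - exp (- k)) * T).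
  apply is_derive_ext with (fun k => Rpower t (a * INR l - 1) * PSeries A (h k)).
  { intros k. unfold A, h. rewrite ML3_PSeries; nra. }
  assert (Hh : is_derive h 0 (- T)) by (unfold h; auto_derive; auto; rewrite Ropp_0, exp_0; ring).
  assert (Hh0 : h 0 = 0) by (unfold h; rewrite Ropp_0, exp_0; ring).
  assert (HA : is_derive (PSeries A) (h 0) (PSeries (PS_derive A) (h 0)))
    by (apply is_derive_PSeries; unfold A; apply ml_radius; nra).
  pose proof (is_derive_scal _ _ (Rpower t (a * INR l - 1)) _ (is_derive_comp _ _ _ _ _ HA Hh)) as H.
  rewrite Hh0, PSeries_0 in H. unfold PS_derive in H.
  replace (- (INR l * Rpower t (INR l * a + a - 1) / Gamma ((INR l + 1) * a)))
    with (Rpower t (a * INR l - 1) * scal (- T) (INR 1 * A 1%nat)); [exact H|].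
  change (scal (- T) (INR 1 * A 1%nat)) with (- T * (INR 1 * A 1%nat)).
  unfold A, ml_coef, T. simpl poch. simpl INR. simpl fact.
  replace (INR l * a + a - 1) with ((a * INR l - 1) + a) by ring.
  rewrite Rpower_plus. replace (a * 1 + a * INR l) with ((INR l + 1) * a) by ring.
  pose proof (Gamma_pos ((INR l + 1) * a) ltac:(nra)). simpl INR. field. lra.
Qed.

End Mean.

(** * Improper integrals over (0, t) *)

Lemma continuous_R_plus (f g : R -> R) x :
  continuous f x -> continuous g x -> continuous (fun y => f y + g y) x.
Proof. apply (@continuous_plus R_UniformSpace R_AbsRing R_NormedModule). Qed.

Lemma continuous_R_mult (f g : R -> R) x :
  continuous f x -> continuous g x -> continuous (fun y => f y * g y) x.
Proof. apply (@continuous_mult R_UniformSpace R_AbsRing). Qed.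

Lemma continuous_R_comp (f g : R -> R) x :
  continuous f x -> continuous g (f x) -> continuous (fun y => g (f y)) x.
Proof. apply (@continuous_comp R_UniformSpace R_UniformSpace R_UniformSpace). Qed.

Lemma continuous_of_is_derive (f : R -> R) x l : is_derive f x l -> continuous f x.
Proof. intros H. apply (@ex_derive_continuous R_AbsRing R_NormedModule). exists l; auto. Qed.

Lemma is_derive_ext_R (f g : R -> R) x l :
  (forall y, f y = g y) -> is_derive f x l -> is_derive g x l.
Proof. apply is_derive_ext. Qed.

Lemma is_derive_mult_R (f g : R -> R) x df dg : is_derive f x df -> is_derive g x dg ->
  is_derive (fun y => f y * g y) x (df * g x + f x * dg).
Proof. intros H1 H2. exact (@is_derive_mult R_AbsRing f g x df dg H1 H2 Rmult_comm). Qed.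

Lemma RInt_lin (f g : R -> R) c d al be : ex_RInt f c d -> ex_RInt g c d ->
  RInt (fun x => al * f x + be * g x) c d = al * RInt f c d + be * RInt g c d.
Proof.
  intros Hf Hg.
  rewrite (@RInt_plus R_CompleteNormedModule (fun x => al * f x) (fun x => be * g x)),
    (@RInt_scal R_CompleteNormedModule f), (@RInt_scal R_CompleteNormedModule g); auto;
    apply (@ex_RInt_scal R_CompleteNormedModule); auto.
Qed.

Section Improper.
Variable t : R.
Hypothesis Ht : 0 < t.

Definition continuous_in_0t (f : R -> R) := forall u, 0 < u < t -> continuous f u.

(* Like [improper_integral f 0 t v], but with continuity on (0, t), so that [RInt] applies. *)
Definition is_improper_RInt (f : R -> R) (v : R) : Prop :=
  continuous_in_0t f /\
  (forall eps, 0 < eps -> exists delta, 0 < delta /\ forall c d,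
     0 < c < delta -> t - delta < d < t -> c <= d -> Rabs (RInt f c d - v) < eps).

Lemma ex_RInt_in_0t f c d : continuous_in_0t f -> 0 < c -> c <= d -> d < t -> ex_RInt f c d.
Proof.
  intros Hf Hc Hcd Hd. apply (@ex_RInt_continuous R_CompleteNormedModule).
  intros z Hz. rewrite Rmin_left, Rmax_right in Hz by lra. apply Hf. lra.
Qed.

Lemma improper_integral_of_RInt f v : is_improper_RInt f v -> improper_integral f 0 t v.
Proof.
  intros [Hf Hl]. split.
  - intros c d Hc Hcd Hd. constructor. apply ex_RInt_Reals_0, ex_RInt_in_0t; auto.
  - intros eps Heps. destruct (Hl eps Heps) as [delta [Hd H]]. exists delta. split; [lra|].
    intros c d pr Hc Hd' Hcd. rewrite <- RInt_Reals. apply H; lra.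
Qed.

Lemma continuous_in_0t_lin f g al be : continuous_in_0t f -> continuous_in_0t g ->
  continuous_in_0t (fun x => al * f x + be * g x).
Proof.
  intros Hf Hg u Hu.
  apply continuous_R_plus; apply continuous_R_mult; auto; apply continuous_const.
Qed.

Lemma is_improper_RInt_lin f g v w al be : is_improper_RInt f v -> is_improper_RInt g w ->
  is_improper_RInt (fun x => al * f x + be * g x) (al * v + be * w).
Proof.
  intros [Hf Hfl] [Hg Hgl]. split; [apply continuous_in_0t_lin; auto|].
  intros eps Heps. pose proof (Rabs_pos al). pose proof (Rabs_pos be).
  set (e := eps / (2 * (Rabs al + Rabs be + 1))).
  assert (He : 0 < e) by (apply Rdiv_lt_0_compat; lra).
  destruct (Hfl e He) as [d1 [Hd1 H1]]. destruct (Hgl e He) as [d2 [Hd2 H2]].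
  exists (Rmin d1 d2). split; [apply Rmin_pos; auto|].
  intros c d Hc Hd Hcd. pose proof (Rmin_l d1 d2). pose proof (Rmin_r d1 d2).
  rewrite RInt_lin by (apply ex_RInt_in_0t; auto; lra).
  specialize (H1 c d ltac:(lra) ltac:(lra) Hcd). specialize (H2 c d ltac:(lra) ltac:(lra) Hcd).
  replace (al * RInt f c d + be * RInt g c d - (al * v + be * w))
    with (al * (RInt f c d - v) + be * (RInt g c d - w)) by ring.
  eapply Rle_lt_trans; [apply Rabs_triang|]. rewrite !Rabs_mult.
  apply Rle_lt_trans with (Rabs al * e + Rabs be * e);
    [apply Rplus_le_compat; apply Rmult_le_compat_l; lra|].
  assert (e * (2 * (Rabs al + Rabs be + 1)) = eps) by (unfold e; field; lra). nra.
Qed.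

Lemma is_improper_RInt_ext f g v : (forall u, 0 < u < t -> f u = g u) ->
  is_improper_RInt f v -> is_improper_RInt g v.
Proof.
  intros E [Hf Hl]. split.
  - intros u Hu. apply (continuous_ext_loc g f); [|apply Hf; auto].
    assert (Hp : 0 < Rmin u (t - u)) by (apply Rmin_pos; lra).
    exists (mkposreal _ Hp). intros y Hy. apply E.
    change (Rabs (y - u) < Rmin u (t - u)) in Hy. apply Rabs_def2 in Hy.
    pose proof (Rmin_l u (t - u)). pose proof (Rmin_r u (t - u)). lra.
  - intros eps Heps. destruct (Hl eps Heps) as [d [Hd H]]. exists d. split; auto.
    intros c dd Hc Hdd Hcd. rewrite <- (RInt_ext f g); [apply H; auto|].
    intros x Hx. rewrite Rmin_left, Rmax_right in Hx by lra. apply E. lra.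
Qed.

Lemma is_improper_RInt_scal f v c : is_improper_RInt f v -> is_improper_RInt (fun u => c * f u) (c * v).
Proof.
  intros H. replace (c * v) with (c * v + 0 * v) by ring.
  eapply is_improper_RInt_ext; [|exact (is_improper_RInt_lin f f v v c 0 H H)].
  intros; simpl; ring.
Qed.

Lemma is_improper_RInt_plus f g v w : is_improper_RInt f v -> is_improper_RInt g w ->
  is_improper_RInt (fun u => f u + g u) (v + w).
Proof.
  intros H1 H2. replace (v + w) with (1 * v + 1 * w) by ring.
  eapply is_improper_RInt_ext; [|exact (is_improper_RInt_lin f g v w 1 1 H1 H2)].
  intros; simpl; ring.
Qed.

Lemma is_improper_RInt_unique f v w : is_improper_RInt f v -> is_improper_RInt f w -> v = w.
Proof.
  intros [Hf H1] [_ H2]. apply Rminus_diag_uniq, Rabs_eq_0.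
  apply Rle_antisym; [|apply Rabs_pos]. apply Rnot_lt_le. intros Hc.
  set (e := Rabs (v - w) / 2).
  destruct (H1 e ltac:(unfold e; lra)) as [d1 [Hd1 K1]].
  destruct (H2 e ltac:(unfold e; lra)) as [d2 [Hd2 K2]].
  set (dl := Rmin (Rmin d1 d2) (t / 2)).
  assert (0 < dl) by (unfold dl; repeat apply Rmin_pos; lra).
  assert (dl <= d1 /\ dl <= d2 /\ dl <= t / 2) as [Hdl1 [Hdl2 Hdl3]].
  { unfold dl. pose proof (Rmin_l (Rmin d1 d2) (t / 2)). pose proof (Rmin_r (Rmin d1 d2) (t / 2)).
    pose proof (Rmin_l d1 d2). pose proof (Rmin_r d1 d2). lra. }
  specialize (K1 (dl / 2) (t - dl / 2) ltac:(lra) ltac:(lra) ltac:(lra)).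
  specialize (K2 (dl / 2) (t - dl / 2) ltac:(lra) ltac:(lra) ltac:(lra)).
  set (I := RInt f (dl / 2) (t - dl / 2)) in *.
  assert (Rabs (v - w) <= Rabs (I - v) + Rabs (I - w)).
  { replace (v - w) with (- (I - v) + (I - w)) by ring.
    eapply Rle_trans; [apply Rabs_triang|]. rewrite Rabs_Ropp. lra. }
  unfold e in *. lra.
Qed.

Section Nonnegative.
Variable f : R -> R.
Hypotheses (Hf : continuous_in_0t f) (Hpos : forall u, 0 < u < t -> 0 <= f u).

Lemma RInt_in_0t_nonneg c d : 0 < c -> c <= d -> d < t -> 0 <= RInt f c d.
Proof.
  intros Hc Hcd Hd. apply RInt_ge_0; auto; [apply ex_RInt_in_0t; auto|].
  intros; apply Hpos; lra.
Qed.

Lemma RInt_in_0t_le_widen c d c' d' :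
  0 < c' -> c' <= c -> c <= d -> d <= d' -> d' < t -> RInt f c d <= RInt f c' d'.
Proof.
  intros H1 H2 H3 H4 H5.
  rewrite <- (@RInt_Chasles R_CompleteNormedModule f c' c d'),
    <- (@RInt_Chasles R_CompleteNormedModule f c d d') by (apply ex_RInt_in_0t; auto; lra).
  pose proof (RInt_in_0t_nonneg c' c ltac:(lra) ltac:(lra) ltac:(lra)).
  pose proof (RInt_in_0t_nonneg d d' ltac:(lra) ltac:(lra) ltac:(lra)).
  unfold plus. simpl. lra.
Qed.

Lemma is_improper_RInt_of_bounded B :
  (forall c d, 0 < c -> c <= d -> d < t -> RInt f c d <= B) -> exists v, is_improper_RInt f v.
Proof.
  intros HB.
  set (E r := exists c d, 0 < c /\ c <= d /\ d < t /\ r = RInt f c d).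
  destruct (completeness E) as [v [Hub Hlub]].
  - exists B. intros r (c & d & H1 & H2 & H3 & ->). apply HB; auto.
  - exists (RInt f (t / 2) (t / 2)), (t / 2), (t / 2). repeat split; lra.
  - exists v. split; auto. intros eps Heps.
    assert (Hex : exists r, E r /\ v - eps < r).
    { apply not_all_not_ex. intros Hn.
      assert (is_upper_bound E (v - eps)).
      { intros r Hr. apply Rnot_lt_le. intros Hc. apply (Hn r). split; auto. }
      specialize (Hlub _ H). lra. }
    destruct Hex as [r [(c0 & d0 & H1 & H2 & H3 & ->) Hr]].
    exists (Rmin c0 (t - d0)). split; [apply Rmin_pos; lra|].
    intros c d Hc Hd Hcd. pose proof (Rmin_l c0 (t - d0)). pose proof (Rmin_r c0 (t - d0)).
    pose proof (RInt_in_0t_le_widen c0 d0 c d ltac:(lra) ltac:(lra) H2 ltac:(lra) ltac:(lra)).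
    assert (RInt f c d <= v) by (apply Hub; exists c, d; repeat split; auto; lra).
    apply Rabs_def1; lra.
Qed.

Lemma RInt_le_is_improper_RInt v c d : is_improper_RInt f v ->
  0 < c -> c <= d -> d < t -> RInt f c d <= v.
Proof.
  intros [_ Hl] Hc Hcd Hd. apply Rnot_lt_le. intros Hlt.
  destruct (Hl (RInt f c d - v) ltac:(lra)) as [dl [Hdl H]].
  pose proof (Rmin_l c (dl / 2)). pose proof (Rmin_r c (dl / 2)).
  pose proof (Rmax_l d (t - dl / 2)). pose proof (Rmax_r d (t - dl / 2)).
  set (c' := Rmin c (dl / 2)) in *. set (d' := Rmax d (t - dl / 2)) in *.
  assert (0 < c') by (apply Rmin_pos; lra).
  assert (d' < t) by (apply Rmax_lub_lt; lra).
  specialize (H c' d' ltac:(lra) ltac:(lra) ltac:(lra)).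
  pose proof (RInt_in_0t_le_widen c d c' d' ltac:(lra) ltac:(lra) Hcd ltac:(lra) ltac:(lra)).
  apply Rabs_def2 in H. lra.
Qed.

End Nonnegative.

Lemma is_improper_RInt_le f g v w : is_improper_RInt f v -> is_improper_RInt g w ->
  (forall u, 0 < u < t -> f u <= g u) -> v <= w.
Proof.
  intros HF HG Hfg.
  pose proof (is_improper_RInt_lin g f w v 1 (-1) HG HF) as HD.
  assert (Hpos : forall u, 0 < u < t -> 0 <= 1 * g u + -1 * f u)
    by (intros u Hu; specialize (Hfg u Hu); lra).
  pose proof (RInt_le_is_improper_RInt _ (proj1 HD) Hpos _ (t / 2) (t / 2) HD
                ltac:(lra) ltac:(lra) ltac:(lra)) as H.
  rewrite RInt_point in H. change (0 <= 1 * w + -1 * v) in H. lra.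
Qed.

Lemma is_improper_RInt_nonneg f v : is_improper_RInt f v -> (forall u, 0 < u < t -> 0 <= f u) -> 0 <= v.
Proof.
  intros H Hp. apply (is_improper_RInt_le (fun _ => 0) f); auto.
  split; [intros u Hu; apply continuous_const|].
  intros eps Heps. exists t. split; auto. intros c d _ _ _.
  rewrite RInt_const. change (Rabs ((d - c) * 0 - 0) < eps).
  rewrite Rmult_0_r, Rminus_diag, Rabs_R0. lra.
Qed.

Lemma is_improper_RInt_derive f G L0 L1 : continuous_in_0t f ->
  (forall u, 0 < u < t -> is_derive G u (f u)) ->
  (forall eps, 0 < eps -> exists dl, 0 < dl /\ forall c, 0 < c < dl -> Rabs (G c - L0) < eps) ->
  (forall eps, 0 < eps -> exists dl, 0 < dl /\ forall d, t - dl < d < t -> Rabs (G d - L1) < eps) ->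
  is_improper_RInt f (L1 - L0).
Proof.
  intros Hf HG H0 H1. split; auto. intros eps Heps.
  destruct (H0 (eps / 2) ltac:(lra)) as [d0 [Hd0 K0]].
  destruct (H1 (eps / 2) ltac:(lra)) as [d1 [Hd1 K1]].
  exists (Rmin d0 d1). split; [apply Rmin_pos; auto|]. intros c d Hc Hd Hcd.
  pose proof (Rmin_l d0 d1). pose proof (Rmin_r d0 d1).
  replace (RInt f c d) with (G d - G c).
  2: { symmetry. apply (@is_RInt_unique R_CompleteNormedModule), (@is_RInt_derive R_CompleteNormedModule);
       intros x Hx; rewrite Rmin_left, Rmax_right in Hx by lra; [apply HG | apply Hf]; lra. }
  specialize (K0 c ltac:(lra)). specialize (K1 d ltac:(lra)).
  replace (G d - G c - (L1 - L0)) with ((G d - L1) - (G c - L0)) by ring.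
  eapply Rle_lt_trans; [apply Rabs_triang|]. rewrite Rabs_Ropp. lra.
Qed.

End Improper.

(** * The Beta integral *)

Lemma is_derive_Rpower x e : 0 < x -> is_derive (fun z => Rpower z e) x (e * Rpower x (e - 1)).
Proof. intros Hx. apply is_derive_Reals, derivable_pt_lim_power, Hx. Qed.

Lemma is_derive_Rpower_sub t u e : u < t ->
  is_derive (fun y => Rpower (t - y) e) u (- (e * Rpower (t - u) (e - 1))).
Proof.
  intros Hu.
  assert (Hd : is_derive (fun y => t - y) u (-1)) by (auto_derive; auto; ring).
  pose proof (is_derive_comp _ _ _ _ _ (is_derive_Rpower (t - u) e ltac:(lra)) Hd) as H.
  replace (- (e * Rpower (t - u) (e - 1))) with (-1 * (e * Rpower (t - u) (e - 1))) by ring.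
  exact H.
Qed.

Lemma continuous_Rpower x e : 0 < x -> continuous (fun z => Rpower z e) x.
Proof. intros Hx. eapply continuous_of_is_derive, is_derive_Rpower, Hx. Qed.

Lemma Rpower_mult_lt_near_0 q B eps : 0 < q -> 0 < B -> 0 < eps ->
  exists dl, 0 < dl /\ forall x y, 0 < x < dl -> 0 <= y <= B -> Rpower x q * y < eps.
Proof.
  intros Hq HB He. exists (Rpower (eps / B) (/ q)). split; [apply Rpower_pos|].
  intros x y Hx Hy.
  assert (Rpower x q < eps / B).
  { replace (eps / B) with (Rpower (Rpower (eps / B) (/ q)) q)
      by (rewrite Rpower_mult, Rinv_l, Rpower_1; [|apply Rdiv_lt_0_compat|]; lra).
    apply Rlt_Rpower_l; lra. }
  pose proof (Rpower_pos x q).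
  apply Rle_lt_trans with (Rpower x q * B); [apply Rmult_le_compat_l; lra|].
  apply (Rmult_lt_compat_r B) in H; [|lra]. replace (eps / B * B) with eps in H by (field; lra). lra.
Qed.

Lemma Rpower_le_endpoints z A B e : 0 < A -> A <= z <= B -> Rpower z e <= Rpower A e + Rpower B e.
Proof.
  intros HA Hz. pose proof (Rpower_pos A e). pose proof (Rpower_pos B e).
  destruct (Rle_dec 0 e) as [h|h].
  - assert (Rpower z e <= Rpower B e) by (apply Rle_Rpower_l; lra). lra.
  - assert (Rpower A (- e) <= Rpower z (- e)) by (apply Rle_Rpower_l; lra).
    pose proof (Rpower_pos A (- e)).
    replace e with (- - e) by ring. rewrite !(Rpower_Ropp _ (- e)).
    assert (/ Rpower z (- e) <= / Rpower A (- e)) by (apply Rinv_le_contravar; lra).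
    pose proof (Rinv_0_lt_compat _ (Rpower_pos B (- e))). lra.
Qed.

Section Beta.
Variable t : R.
Hypothesis Ht : 0 < t.

Definition beta_kernel (p q u : R) : R := Rpower (t - u) (p - 1) * Rpower u (q - 1).

Lemma beta_kernel_nonneg p q u : 0 <= beta_kernel p q u.
Proof. apply Rmult_le_pos; left; apply Rpower_pos. Qed.

Lemma continuous_in_0t_pow_left q : continuous_in_0t t (fun u => Rpower u (q - 1)).
Proof. intros u Hu. apply continuous_Rpower; lra. Qed.

Lemma continuous_in_0t_pow_right p : continuous_in_0t t (fun u => Rpower (t - u) (p - 1)).
Proof. intros u Hu. eapply continuous_of_is_derive, is_derive_Rpower_sub. lra. Qed.

Lemma continuous_in_0t_beta_kernel p q : continuous_in_0t t (beta_kernel p q).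
Proof.
  intros u Hu. apply continuous_R_mult;
    [apply continuous_in_0t_pow_right | apply continuous_in_0t_pow_left]; auto.
Qed.

Lemma RInt_pow_left q c d : 0 < q -> 0 < c -> c <= d ->
  RInt (fun u => Rpower u (q - 1)) c d = Rpower d q / q - Rpower c q / q.
Proof.
  intros Hq Hc Hcd.
  apply (@is_RInt_unique R_CompleteNormedModule),
    (@is_RInt_derive R_CompleteNormedModule (fun u => Rpower u q / q));
    intros x Hx; rewrite Rmin_left, Rmax_right in Hx by lra.
  - apply (is_derive_ext_R (fun y => / q * Rpower y q)); [intros; unfold Rdiv; ring|].
    replace (Rpower x (q - 1)) with (/ q * (q * Rpower x (q - 1))) by (field; lra).
    apply is_derive_scal, is_derive_Rpower. lra.
  - apply continuous_Rpower. lra.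
Qed.

Lemma is_derive_Rpower_sub_div p u : 0 < p -> u < t ->
  is_derive (fun y => - Rpower (t - y) p / p) u (Rpower (t - u) (p - 1)).
Proof.
  intros Hp Hu. apply (is_derive_ext_R (fun y => (- / p) * Rpower (t - y) p));
    [intros; unfold Rdiv; ring|].
  replace (Rpower (t - u) (p - 1)) with ((- / p) * (- (p * Rpower (t - u) (p - 1)))) by (field; lra).
  apply is_derive_scal, is_derive_Rpower_sub, Hu.
Qed.

Lemma RInt_pow_right p c d : 0 < p -> c <= d -> d < t ->
  RInt (fun u => Rpower (t - u) (p - 1)) c d = Rpower (t - c) p / p - Rpower (t - d) p / p.
Proof.
  intros Hp Hcd Hd.
  replace (Rpower (t - c) p / p - Rpower (t - d) p / p)
    with (- Rpower (t - d) p / p - - Rpower (t - c) p / p) by (field; lra).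
  apply (@is_RInt_unique R_CompleteNormedModule),
    (@is_RInt_derive R_CompleteNormedModule (fun u => - Rpower (t - u) p / p));
    intros x Hx; rewrite Rmin_left, Rmax_right in Hx by lra.
  - apply is_derive_Rpower_sub_div; lra.
  - eapply continuous_of_is_derive, is_derive_Rpower_sub. lra.
Qed.

Lemma beta_kernel_le p q u : 0 < u < t ->
  beta_kernel p q u <= ((Rpower t (p - 1) + Rpower (t / 2) (p - 1))
                         + (Rpower t (q - 1) + Rpower (t / 2) (q - 1)))
                        * (Rpower u (q - 1) + Rpower (t - u) (p - 1)).
Proof.
  intros Hu. unfold beta_kernel.
  pose proof (Rpower_pos t (p - 1)). pose proof (Rpower_pos (t / 2) (p - 1)).
  pose proof (Rpower_pos t (q - 1)). pose proof (Rpower_pos (t / 2) (q - 1)).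
  pose proof (Rpower_pos u (q - 1)). pose proof (Rpower_pos (t - u) (p - 1)).
  destruct (Rle_dec u (t / 2)).
  - pose proof (Rpower_le_endpoints (t - u) (t / 2) t (p - 1) ltac:(lra) ltac:(lra)). nra.
  - pose proof (Rpower_le_endpoints u (t / 2) t (q - 1) ltac:(lra) ltac:(lra)). nra.
Qed.

(* Near each endpoint the kernel is dominated by the integrable power there. *)
Lemma beta_integral_exists p q : 0 < p -> 0 < q -> exists v, is_improper_RInt t (beta_kernel p q) v.
Proof.
  intros Hp Hq.
  set (M := (Rpower t (p - 1) + Rpower (t / 2) (p - 1)) + (Rpower t (q - 1) + Rpower (t / 2) (q - 1))).
  assert (HM : 0 < M) by (unfold M; pose proof (Rpower_pos t (p - 1));
    pose proof (Rpower_pos (t / 2) (p - 1)); pose proof (Rpower_pos t (q - 1));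
    pose proof (Rpower_pos (t / 2) (q - 1)); lra).
  apply (is_improper_RInt_of_bounded t Ht _ (continuous_in_0t_beta_kernel p q)
           (fun u _ => beta_kernel_nonneg p q u) (M * (Rpower t q / q + Rpower t p / p))).
  intros c d Hc Hcd Hd.
  assert (Hcont : continuous_in_0t t (fun u => M * Rpower u (q - 1) + M * Rpower (t - u) (p - 1)))
    by (apply continuous_in_0t_lin; [apply continuous_in_0t_pow_left | apply continuous_in_0t_pow_right]).
  apply Rle_trans with (RInt (fun u => M * Rpower u (q - 1) + M * Rpower (t - u) (p - 1)) c d).
  - apply RInt_le; [lra | apply (ex_RInt_in_0t t); auto using continuous_in_0t_beta_kernel |
      apply (ex_RInt_in_0t t); auto|].
    intros x Hx. rewrite <- Rmult_plus_distr_l. apply beta_kernel_le. lra.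
  - rewrite RInt_lin, RInt_pow_left, RInt_pow_right by
      (try apply (ex_RInt_in_0t t); auto using continuous_in_0t_pow_left, continuous_in_0t_pow_right; lra).
    assert (Rpower d q <= Rpower t q) by (apply Rle_Rpower_l; lra).
    assert (Rpower (t - c) p <= Rpower t p) by (apply Rle_Rpower_l; lra).
    pose proof (Rpower_pos c q). pose proof (Rpower_pos (t - d) p).
    rewrite <- Rmult_plus_distr_l. apply Rmult_le_compat_l; [lra|].
    unfold Rdiv. pose proof (Rinv_0_lt_compat p Hp). pose proof (Rinv_0_lt_compat q Hq). nra.
Qed.

(* Junk value unless [p, q > 0]. *)
Definition beta_integral (p q : R) : R :=
  epsilon (inhabits 0) (fun v => is_improper_RInt t (beta_kernel p q) v).

Lemma is_improper_RInt_beta p q : 0 < p -> 0 < q ->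
  is_improper_RInt t (beta_kernel p q) (beta_integral p q).
Proof. intros. unfold beta_integral. apply epsilon_spec, beta_integral_exists; auto. Qed.

Lemma beta_integral_unique p q v : 0 < p -> 0 < q ->
  is_improper_RInt t (beta_kernel p q) v -> beta_integral p q = v.
Proof. intros. apply (is_improper_RInt_unique t Ht (beta_kernel p q)); auto using is_improper_RInt_beta. Qed.

Lemma beta_integral_nonneg p q : 0 < p -> 0 < q -> 0 <= beta_integral p q.
Proof.
  intros Hp Hq. apply (is_improper_RInt_nonneg t Ht (beta_kernel p q));
    [apply is_improper_RInt_beta; auto | intros; apply beta_kernel_nonneg].
Qed.

Lemma beta_integral_1 p : 0 < p -> beta_integral p 1 = Rpower t p / p.
Proof.
  intros Hp. apply beta_integral_unique; [auto | lra|].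
  apply (is_improper_RInt_ext t (fun u => Rpower (t - u) (p - 1))).
  { intros u Hu. unfold beta_kernel. rewrite Rminus_diag, Rpower_O by lra. ring. }
  replace (Rpower t p / p) with (0 - (- Rpower t p / p)) by (field; lra).
  apply (is_improper_RInt_derive t (fun u => Rpower (t - u) (p - 1)) (fun u => - Rpower (t - u) p / p)).
  - apply continuous_in_0t_pow_right.
  - intros u Hu. apply is_derive_Rpower_sub_div; lra.
  - intros eps He. pose proof (continuous_Rpower t p Ht) as Hc.
    destruct (proj1 (filterlim_locally _ _) Hc (mkposreal (eps * p) ltac:(simpl; nra))) as [dl Hdl].
    exists dl. split; [apply cond_pos|]. intros c Hc'.
    specialize (Hdl (t - c)). simpl in Hdl.
    assert (Hb : Rabs (Rpower (t - c) p - Rpower t p) < eps * p).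
    { apply Hdl. change (Rabs (t - c - t) < dl). rewrite Rabs_left; lra. }
    replace (- Rpower (t - c) p / p - - Rpower t p / p) with (- (Rpower (t - c) p - Rpower t p) / p)
      by (field; lra).
    unfold Rdiv. rewrite Rabs_mult, Rabs_Ropp, (Rabs_pos_eq (/ p)) by (left; apply Rinv_0_lt_compat; lra).
    apply (Rmult_lt_reg_r p); auto. rewrite Rmult_assoc, Rinv_l, Rmult_1_r by lra. lra.
  - intros eps He. pose proof (Rinv_0_lt_compat p Hp).
    destruct (Rpower_mult_lt_near_0 p (/ p) eps Hp ltac:(auto) He) as [dl [Hdl Hsmall]].
    exists dl. split; auto. intros d Hd. pose proof (Rpower_pos (t - d) p).
    rewrite Rminus_0_r, Rabs_left1 by (unfold Rdiv; nra).
    replace (- (- Rpower (t - d) p / p)) with (Rpower (t - d) p * / p) by (field; lra).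
    apply Hsmall; lra.
Qed.

(* Integration by parts, with the boundary term [u^q (t-u)^p] vanishing at both ends. *)
Lemma beta_integral_succ p q : 0 < p -> 0 < q ->
  beta_integral p (q + 1) * (p + q) = q * t * beta_integral p q.
Proof.
  intros Hp Hq.
  pose proof (is_improper_RInt_lin t _ _ _ _ (q * t) (- (p + q)) (is_improper_RInt_beta p q Hp Hq)
                (is_improper_RInt_beta p (q + 1) Hp ltac:(lra))) as H1.
  assert (H2 : is_improper_RInt t (fun x => q * t * beta_kernel p q x + - (p + q) * beta_kernel p (q + 1) x)
                 (0 - 0)).
  { apply (is_improper_RInt_derive t _ (fun u => Rpower u q * Rpower (t - u) p)).
    - apply continuous_in_0t_lin; apply continuous_in_0t_beta_kernel.
    - intros u Hu.
      replace (q * t * beta_kernel p q u + - (p + q) * beta_kernel p (q + 1) u) with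
        (q * Rpower u (q - 1) * Rpower (t - u) p + Rpower u q * - (p * Rpower (t - u) (p - 1))).
      + apply (is_derive_mult_R (fun y => Rpower y q) (fun y => Rpower (t - y) p));
          [apply is_derive_Rpower | apply is_derive_Rpower_sub]; lra.
      + unfold beta_kernel. replace (q + 1 - 1) with q by ring.
        rewrite (Rpower_pred u q), (Rpower_pred (t - u) p) by lra. ring.
    - intros eps He.
      destruct (Rpower_mult_lt_near_0 q (Rpower t p) eps Hq (Rpower_pos t p) He) as [dl [Hdl Hsmall]].
      exists (Rmin dl t). split; [apply Rmin_pos; auto|]. intros c Hc.
      pose proof (Rmin_l dl t). pose proof (Rmin_r dl t).
      assert (Rpower (t - c) p <= Rpower t p) by (apply Rle_Rpower_l; lra).
      rewrite Rminus_0_r, Rabs_pos_eq by (apply Rmult_le_pos; left; apply Rpower_pos).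
      apply Hsmall; [lra | split; [left; apply Rpower_pos | auto]].
    - intros eps He.
      destruct (Rpower_mult_lt_near_0 p (Rpower t q) eps Hp (Rpower_pos t q) He) as [dl [Hdl Hsmall]].
      exists (Rmin dl t). split; [apply Rmin_pos; auto|]. intros d Hd.
      pose proof (Rmin_l dl t). pose proof (Rmin_r dl t).
      assert (Rpower d q <= Rpower t q) by (apply Rle_Rpower_l; lra).
      rewrite Rminus_0_r, Rabs_pos_eq, Rmult_comm by (apply Rmult_le_pos; left; apply Rpower_pos).
      apply Hsmall; [lra | split; [left; apply Rpower_pos | auto]]. }
  pose proof (is_improper_RInt_unique t Ht _ _ _ H1 H2). lra.
Qed.

Lemma beta_integral_le_shift p s s' : 0 < p -> 0 < s -> s <= s' ->
  beta_integral p s' <= Rpower t (s' - s) * beta_integral p s.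
Proof.
  intros Hp Hs Hss.
  apply (is_improper_RInt_le t Ht (beta_kernel p s') (fun u => Rpower t (s' - s) * beta_kernel p s u));
    [apply is_improper_RInt_beta; lra | apply is_improper_RInt_scal, is_improper_RInt_beta; auto|].
  intros u Hu. unfold beta_kernel.
  replace (s' - 1) with ((s - 1) + (s' - s)) by ring. rewrite Rpower_plus.
  pose proof (Rpower_pos (t - u) (p - 1)). pose proof (Rpower_pos u (s - 1)).
  assert (Rpower u (s' - s) <= Rpower t (s' - s)) by (apply Rle_Rpower_l; lra).
  replace (Rpower t (s' - s) * (Rpower (t - u) (p - 1) * Rpower u (s - 1)))
    with (Rpower (t - u) (p - 1) * Rpower u (s - 1) * Rpower t (s' - s)) by ring.
  rewrite <- Rmult_assoc. apply Rmult_le_compat_l; nra.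
Qed.

Lemma beta_integral_nat p n : 0 < p ->
  beta_integral p (INR n + 1) * prod_shift p n = Rpower t (p + INR n) * INR (fact n).
Proof.
  intros Hp. induction n.
  - rewrite Rplus_0_l, Rplus_0_r, beta_integral_1 by auto. cbn [prod_shift]. simpl. field. lra.
  - cbn [prod_shift]. rewrite S_INR in *.
    pose proof (beta_integral_succ p (INR n + 1) Hp ltac:(pose proof (pos_INR n); lra)) as R.
    rewrite fact_simpl, mult_INR, S_INR.
    replace (p + (INR n + 1)) with ((p + INR n) + 1) by ring. rewrite Rpower_plus, Rpower_1 by lra.
    transitivity (prod_shift p n * (beta_integral p (INR n + 1 + 1) * (p + (INR n + 1)))); [ring|].
    rewrite R. transitivity (beta_integral p (INR n + 1) * prod_shift p n * (t * (INR n + 1))); [ring|].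
    rewrite IHn. ring.
Qed.

Lemma beta_integral_nat_pos p n : 0 < p -> 0 < beta_integral p (INR n + 1).
Proof.
  intros Hp. pose proof (beta_integral_nat p n Hp). pose proof (prod_shift_pos p n Hp).
  pose proof (Rpower_pos t (p + INR n)). pose proof (INR_fact_lt_0 n).
  assert (0 < beta_integral p (INR n + 1) * prod_shift p n) by (rewrite H; nra). nra.
Qed.

Lemma beta_integral_shift_nat p q n : 0 < p -> 0 < q ->
  beta_integral p (q + INR n + 1) * prod_shift (p + q) n = beta_integral p q * t ^ S n * prod_shift q n.
Proof.
  intros Hp Hq. induction n.
  - replace (q + INR 0 + 1) with (q + 1) by (simpl; ring). cbn [prod_shift].
    rewrite beta_integral_succ by auto. rewrite pow_1. ring.
  - cbn [prod_shift]. pose proof (pos_INR n). rewrite S_INR.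
    pose proof (beta_integral_succ p (q + INR n + 1) Hp ltac:(lra)) as R.
    replace (q + (INR n + 1) + 1) with (q + INR n + 1 + 1) by ring.
    replace (p + q + (INR n + 1)) with (p + (q + INR n + 1)) by ring.
    transitivity (prod_shift (p + q) n * (beta_integral p (q + INR n + 1 + 1) * (p + (q + INR n + 1))));
      [ring|].
    rewrite R. transitivity (t * (q + INR n + 1) * (beta_integral p (q + INR n + 1) * prod_shift (p + q) n));
      [ring|].
    rewrite IHn. simpl. ring.
Qed.


Lemma beta_integral_nat_ratio_lb p n K : 0 < p ->
  beta_integral p (INR n + 1) * t ^ K * (INR n / (p + INR (S n))) ^ K
  <= beta_integral p (INR (n + K) + 1).
Proof.
  intros Hp. pose proof (pos_INR n). set (r := INR n / (p + INR (S n))).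
  assert (Hr0 : 0 <= r) by (apply Rle_mult_inv_pos; [|rewrite S_INR]; lra).
  induction K; [rewrite Nat.add_0_r; simpl; lra|].
  rewrite Nat.add_succ_r. set (q := INR (n + K) + 1).
  assert (Hq : 0 < q) by (unfold q; pose proof (pos_INR (n + K)); lra).
  pose proof (beta_integral_nat_pos p (n + K) Hp). fold q in H0.
  replace (INR (S (n + K)) + 1) with (q + 1) by (unfold q; rewrite S_INR; ring).
  replace (beta_integral p (q + 1)) with (beta_integral p q * t * (q / (p + q)))
    by (apply (Rmult_eq_reg_r (p + q)); [rewrite beta_integral_succ by lra; field|]; lra).
  assert (Hr : r <= q / (p + q)).
  { unfold r, q. rewrite plus_INR, S_INR. pose proof (pos_INR K).
    apply (Rmult_le_reg_r ((p + (INR n + 1)) * (p + (INR n + INR K + 1)))); [nra|].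
    field_simplify; nra. }
  rewrite <- tech_pow_Rmult, <- (tech_pow_Rmult r).
  replace (beta_integral p (INR n + 1) * (t * t ^ K) * (r * r ^ K))
    with (beta_integral p (INR n + 1) * t ^ K * r ^ K * (t * r)) by ring.
  fold q in IHK. apply Rle_trans with (beta_integral p q * (t * r)).
  - apply Rmult_le_compat_r; [nra | exact IHK].
  - rewrite Rmult_assoc. apply Rmult_le_compat_l; [lra|]. apply Rmult_le_compat_l; lra.
Qed.

Lemma is_lim_seq_beta_ratio p q : 0 < p -> 0 < q ->
  is_lim_seq (fun n => beta_integral p (q + INR n + 1) / beta_integral p (INR n + 1)) (Rpower t q).
Proof.
  intros Hp Hq. destruct (nat_above q) as [K HK].
  apply is_lim_seq_le_le with (fun n => Rpower t q * (INR n / (p + INR (S n))) ^ K) (fun _ => Rpower t q).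
  - intros n. pose proof (beta_integral_nat_pos p n Hp) as HB. pose proof (pos_INR n).
    assert (HK' : Rpower t (INR K - q) * Rpower t q = t ^ K)
      by (rewrite <- Rpower_plus, <- Rpower_pow by auto; f_equal; ring).
    pose proof (Rpower_pos t (INR K - q)).
    split; apply (Rmult_le_reg_r (beta_integral p (INR n + 1))); auto;
      replace (beta_integral p (q + INR n + 1) / beta_integral p (INR n + 1)
               * beta_integral p (INR n + 1)) with (beta_integral p (q + INR n + 1)) by (field; lra).
    + apply (Rmult_le_reg_l (Rpower t (INR K - q))); auto.
      pose proof (beta_integral_nat_ratio_lb p n K Hp).
      pose proof (beta_integral_le_shift p (q + INR n + 1) (INR (n + K) + 1) Hp ltac:(lra)
                    ltac:(rewrite plus_INR; lra)) as Hsh.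
      replace (INR (n + K) + 1 - (q + INR n + 1)) with (INR K - q) in Hsh by (rewrite plus_INR; ring).
      replace (Rpower t (INR K - q) * (Rpower t q * (INR n / (p + INR (S n))) ^ K
                                        * beta_integral p (INR n + 1)))
        with (beta_integral p (INR n + 1) * (Rpower t (INR K - q) * Rpower t q)
              * (INR n / (p + INR (S n))) ^ K) by (unfold Rdiv; ring).
      rewrite HK'. lra.
    + pose proof (beta_integral_le_shift p (INR n + 1) (q + INR n + 1) Hp ltac:(lra) ltac:(lra)).
      replace (q + INR n + 1 - (INR n + 1)) with q in H1 by ring. lra.
  - pose proof (is_lim_seq_INR_frac p (Rlt_le _ _ Hp)) as H.
    assert (HK1 : is_lim_seq (fun n => (INR n / (p + INR (S n))) ^ K) (1 ^ K)).
    { clear HK. induction K; [apply is_lim_seq_const|].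
      apply (is_lim_seq_mult' _ _ _ _ H IHK). }
    apply (is_lim_seq_scal_l _ (Rpower t q)) in HK1. simpl in HK1.
    rewrite pow1, Rmult_1_r in HK1. exact HK1.
  - apply is_lim_seq_const.
Qed.

(* The Gauss products for [Gamma p Gamma q / Gamma (p + q)] reproduce the
   recurrences of [beta_integral] in [q] and [n]. *)
Lemma gauss_beta_identity p q n : 0 < p -> 0 < q ->
  gauss_seq p n * gauss_seq q n / gauss_seq (p + q) n * Rpower t (p - 1)
  * (beta_integral p (q + INR n + 1) / beta_integral p (INR n + 1)) = beta_integral p q.
Proof.
  intros Hp Hq.
  pose proof (beta_integral_shift_nat p q n Hp Hq) as HA. pose proof (beta_integral_nat p n Hp) as HB.
  pose proof (prod_shift_pos p n Hp). pose proof (prod_shift_pos q n Hq).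
  pose proof (prod_shift_pos (p + q) n ltac:(lra)). pose proof (INR_fact_lt_0 n).
  pose proof (Rpower_pos (INR n) p). pose proof (Rpower_pos (INR n) q).
  pose proof (Rpower_pos t (p - 1)). pose proof (pow_lt t (S n) Ht).
  replace (Rpower t (p + INR n)) with (Rpower t (p - 1) * t ^ S n) in HB
    by (rewrite <- Rpower_pow, <- Rpower_plus by auto; f_equal; rewrite S_INR; ring).
  replace (beta_integral p (q + INR n + 1))
    with (beta_integral p q * t ^ S n * prod_shift q n / prod_shift (p + q) n) by (rewrite <- HA; field; lra).
  replace (beta_integral p (INR n + 1))
    with (Rpower t (p - 1) * t ^ S n * INR (fact n) / prod_shift p n) by (rewrite <- HB; field; lra).
  unfold gauss_seq. rewrite Rpower_plus. field. repeat split; lra.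
Qed.

Theorem beta_integral_eq p q : 0 < p -> 0 < q ->
  beta_integral p q = Rpower t (p + q - 1) * Gamma p * Gamma q / Gamma (p + q).
Proof.
  intros Hp Hq. pose proof (Gamma_pos (p + q) ltac:(lra)).
  assert (Hl : is_lim_seq (fun n => gauss_seq p n * gauss_seq q n / gauss_seq (p + q) n * Rpower t (p - 1)
      * (beta_integral p (q + INR n + 1) / beta_integral p (INR n + 1)))
      (Gamma p * Gamma q / Gamma (p + q) * Rpower t (p - 1) * Rpower t q)).
  { apply is_lim_seq_mult'; [apply is_lim_seq_mult'|].
    - apply is_lim_seq_div'; [apply is_lim_seq_mult'| |lra]; apply is_lim_seq_Reals, Gamma_cv; lra.
    - apply is_lim_seq_const.
    - apply is_lim_seq_beta_ratio; auto. }
  apply (is_lim_seq_ext _ (fun _ => beta_integral p q)) in Hl; [|intros; apply gauss_beta_identity; auto].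
  apply is_lim_seq_unique in Hl. rewrite Lim_seq_const in Hl. injection Hl as ->.
  replace (p + q - 1) with ((p - 1) + q) by ring. rewrite Rpower_plus. field. lra.
Qed.

End Beta.

(** * Fractional integrals of [phi] and the renewal equation *)

Section TermwiseIntegration.
Variables a t : R.
Hypotheses (Ha : 0 < a) (Ht : 0 < t).

Let ml := ml_coef a a 1.
Let M := ML3 a a 1 (Rpower t a).
Let partial_sum N u := sum_f_R0 (fun k => ml k * (- Rpower u a) ^ k) N.

Lemma ML3_phi_tail N u : 0 < u < t ->
  Rabs (ML3 a a 1 (- Rpower u a) - partial_sum N u)
  <= M - sum_f_R0 (fun k => ml k * Rpower t a ^ k) N.
Proof.
  intros Hu. apply sum_f_R0_tail_bound; try apply is_series_Reals, ML3_is_series; try lra.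
  intros k. pose proof (ml_coef_nonneg a a 1 Ha Ha ltac:(lra) k).
  rewrite Rabs_mult, Rabs_pos_eq by auto. apply Rmult_le_compat_l; auto.
  rewrite <- RPow_abs, Rabs_Ropp, Rabs_pos_eq by (left; apply Rpower_pos).
  apply pow_incr. split; [left; apply Rpower_pos | apply Rle_Rpower_l; lra].
Qed.

Lemma ML3_phi_bound u : 0 < u < t -> Rabs (ML3 a a 1 (- Rpower u a)) <= M.
Proof.
  intros Hu. pose proof (ML3_phi_tail 0 u Hu) as H. unfold partial_sum in H.
  cbn [sum_f_R0 pow] in H. rewrite Rmult_1_r in *.
  pose proof (Rabs_triang_inv (ML3 a a 1 (- Rpower u a)) (ml 0)).
  pose proof (ml_coef_nonneg a a 1 Ha Ha ltac:(lra) 0). unfold ml in *.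
  rewrite (Rabs_pos_eq (ml_coef a a 1 0)) in H0 by auto. lra.
Qed.

Lemma continuous_in_0t_ML3_phi : continuous_in_0t t (fun u => ML3 a a 1 (- Rpower u a)).
Proof.
  intros u Hu.
  apply (continuous_ext (fun y => PSeries ml (- Rpower y a)));
    [intros y; symmetry; apply ML3_PSeries; lra|].
  apply (continuous_R_comp (fun y => - Rpower y a) (PSeries ml)).
  - eapply continuous_of_is_derive. apply (is_derive_ext_R (fun y => -1 * Rpower y a)); [intros; ring|].
    apply is_derive_scal, is_derive_Rpower. lra.
  - apply continuity_pt_filterlim, PSeries_continuity, ml_radius; lra.
Qed.

Lemma beta_kernel_ml_term p k u : 0 < u ->
  beta_kernel t p a u * (ml k * (- Rpower u a) ^ k)
  = ml k * (-1) ^ k * beta_kernel t p (a + a * INR k) u.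
Proof.
  intros Hu. unfold beta_kernel.
  replace (a + a * INR k - 1) with ((a - 1) + INR k * a) by ring.
  rewrite Rpower_plus_INR_mult by auto.
  replace (- Rpower u a) with ((-1) * Rpower u a) by ring. rewrite Rpow_mult_distr. ring.
Qed.

Section Kernel.
Variable p : R.
Hypothesis Hp : 0 < p.

Let beta_term k := ml k * (-1) ^ k * beta_integral t p (a + a * INR k).

Lemma is_improper_RInt_partial_sum N :
  is_improper_RInt t (fun u => beta_kernel t p a u * partial_sum N u) (sum_f_R0 beta_term N).
Proof.
  assert (Hk : forall k, is_improper_RInt t (fun u => beta_kernel t p a u * (ml k * (- Rpower u a) ^ k))
                           (beta_term k)).
  { intros k. pose proof (pos_INR k).
    eapply is_improper_RInt_ext; [|apply is_improper_RInt_scal, is_improper_RInt_beta; auto; nra].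
    intros u Hu. simpl. rewrite beta_kernel_ml_term by lra. ring. }
  induction N; [apply Hk|].
  rewrite tech5. eapply is_improper_RInt_ext; [|exact (is_improper_RInt_plus t _ _ _ _ IHN (Hk (S N)))].
  intros u Hu. unfold partial_sum. rewrite tech5. ring.
Qed.

Lemma continuous_in_0t_kernel_ML3 :
  continuous_in_0t t (fun u => beta_kernel t p a u * ML3 a a 1 (- Rpower u a)).
Proof.
  intros u Hu. apply continuous_R_mult;
    [apply continuous_in_0t_beta_kernel | apply continuous_in_0t_ML3_phi]; auto.
Qed.

(* [|kernel * E| <= M kernel], so [kernel * E + M kernel] is nonnegative with bounded integrals. *)
Lemma is_improper_RInt_kernel_ML3_exists :
  exists V, is_improper_RInt t (fun u => beta_kernel t p a u * ML3 a a 1 (- Rpower u a)) V.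
Proof.
  pose proof (is_improper_RInt_beta t Ht p a Hp Ha) as HJ.
  assert (Hsand : forall u, 0 < u < t -> - (M * beta_kernel t p a u)
            <= beta_kernel t p a u * ML3 a a 1 (- Rpower u a) <= M * beta_kernel t p a u).
  { intros u Hu. pose proof (ML3_phi_bound u Hu) as H. pose proof (beta_kernel_nonneg t p a u).
    apply Rabs_le_between in H. split; nra. }
  set (f u := 1 * (beta_kernel t p a u * ML3 a a 1 (- Rpower u a)) + M * beta_kernel t p a u).
  assert (Hf : continuous_in_0t t f)
    by (apply continuous_in_0t_lin; [apply continuous_in_0t_kernel_ML3 | apply continuous_in_0t_beta_kernel]).
  destruct (is_improper_RInt_of_bounded t Ht f Hf
              ltac:(intros u Hu; specialize (Hsand u Hu); unfold f; lra)
              (2 * M * beta_integral t p a)) as [V HV].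
  - intros c d Hc Hcd Hd.
    apply Rle_trans with (RInt (fun u => (2 * M) * beta_kernel t p a u + 0 * beta_kernel t p a u) c d).
    + apply RInt_le; [lra | apply (ex_RInt_in_0t t); auto |
        apply (ex_RInt_in_0t t); auto; apply continuous_in_0t_lin; apply continuous_in_0t_beta_kernel|].
      intros x Hx. specialize (Hsand x ltac:(lra)). unfold f. lra.
    + rewrite RInt_lin by (apply (ex_RInt_in_0t t); auto; apply continuous_in_0t_beta_kernel).
      pose proof (RInt_le_is_improper_RInt t _ (continuous_in_0t_beta_kernel t p a)
                    (fun u _ => beta_kernel_nonneg t p a u) _ c d HJ Hc Hcd Hd).
      pose proof (Rle_trans _ _ _ (Rabs_pos _) (ML3_phi_bound (t / 2) ltac:(lra))). nra.
  - exists (1 * V + - M * beta_integral t p a).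
    eapply is_improper_RInt_ext; [|exact (is_improper_RInt_lin t _ _ _ _ 1 (- M) HV HJ)].
    intros u Hu. unfold f. ring.
Qed.

Lemma infinite_sum_kernel_ML3 V :
  is_improper_RInt t (fun u => beta_kernel t p a u * ML3 a a 1 (- Rpower u a)) V ->
  infinite_sum beta_term V.
Proof.
  intros HV. pose proof (is_improper_RInt_beta t Ht p a Hp Ha) as HJ.
  pose proof (beta_integral_nonneg t Ht p a Hp Ha) as HJ0.
  set (tail N := M - sum_f_R0 (fun k => ml k * Rpower t a ^ k) N).
  assert (Hdiff : forall N, Rabs (V - sum_f_R0 beta_term N) <= tail N * beta_integral t p a).
  { intros N. pose proof (is_improper_RInt_lin t _ _ _ _ 1 (-1) HV (is_improper_RInt_partial_sum N)) as HD.
    pose proof (is_improper_RInt_scal t _ _ (tail N) HJ) as HE.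
    assert (Hpt : forall u, 0 < u < t ->
      - (tail N * beta_kernel t p a u)
      <= 1 * (beta_kernel t p a u * ML3 a a 1 (- Rpower u a)) + -1 * (beta_kernel t p a u * partial_sum N u)
      <= tail N * beta_kernel t p a u).
    { intros u Hu. pose proof (ML3_phi_tail N u Hu) as H. fold (tail N) in H.
      pose proof (beta_kernel_nonneg t p a u). apply Rabs_le_between in H. split; nra. }
    replace (V - sum_f_R0 beta_term N) with (1 * V + -1 * sum_f_R0 beta_term N) by ring.
    apply Rabs_le. split.
    - replace (- (tail N * beta_integral t p a)) with (-1 * (tail N * beta_integral t p a)) by ring.
      apply (is_improper_RInt_le t Ht _ _ _ _ (is_improper_RInt_scal t _ _ (-1) HE) HD).
      intros u Hu. specialize (Hpt u Hu). lra.
    - apply (is_improper_RInt_le t Ht _ _ _ _ HD HE). intros u Hu. specialize (Hpt u Hu). lra. }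
  assert (Htail : infinite_sum (fun k => ml k * Rpower t a ^ k) M)
    by (apply is_series_Reals, ML3_is_series; lra).
  intros eps Heps.
  destruct (Htail (eps / (beta_integral t p a + 1)) ltac:(apply Rdiv_lt_0_compat; lra)) as [N0 HN0].
  exists N0. intros n Hn. specialize (HN0 n Hn). specialize (Hdiff n). unfold Rdist in *.
  rewrite Rabs_minus_sym. apply Rabs_def2 in HN0. unfold tail in Hdiff.
  apply Rle_lt_trans with ((M - sum_f_R0 (fun k => ml k * Rpower t a ^ k) n) * beta_integral t p a); auto.
  apply Rle_lt_trans with (eps / (beta_integral t p a + 1) * beta_integral t p a);
    [apply Rmult_le_compat_r; lra|].
  apply (Rmult_lt_reg_r (beta_integral t p a + 1)); [lra|].
  replace (eps / (beta_integral t p a + 1) * beta_integral t p a * (beta_integral t p a + 1))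
    with (eps * beta_integral t p a) by (field; lra). nra.
Qed.

End Kernel.
End TermwiseIntegration.

Lemma is_series_alternating_shift (x : nat -> R) A B :
  is_series (fun k => (-1) ^ k * x k) A -> is_series (fun k => (-1) ^ k * x (S k)) B ->
  A + B = x 0%nat.
Proof.
  intros HA HB.
  replace A with ((A - x 0%nat) + (-1) ^ 0 * x 0%nat) in HA by (simpl; ring).
  apply (is_series_incr_1 (fun k => (-1) ^ k * x k)) in HA.
  apply (@is_series_scal_l R_AbsRing R_NormedModule (-1)) in HA.
  apply (is_series_ext _ (fun k => (-1) ^ k * x (S k))) in HA;
    [|intros k; change (-1 * ((-1) ^ S k * x (S k)) = (-1) ^ k * x (S k)); simpl; ring].
  apply is_series_unique in HA. apply is_series_unique in HB. rewrite HA in HB.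
  change (-1 * (A - x 0%nat) = B) in HB. lra.
Qed.

(* [(-1)^k rl_term a t p k] is the [k]-th term of the Riemann-Liouville integral
   [I^p phi_a (t) = t^(p+a-1) E_{a,p+a}(-t^a)]. *)
Definition rl_term (a t p : R) (k : nat) : R :=
  Rpower t (p + a + a * INR k - 1) / Gamma (p + a + a * INR k).

Lemma ml_beta_term_eq a t p k : 0 < a -> 0 < t -> 0 < p ->
  ml_coef a a 1 k * (-1) ^ k * beta_integral t p (a + a * INR k)
  = Gamma p * ((-1) ^ k * rl_term a t p k).
Proof.
  intros Ha Ht Hp. pose proof (pos_INR k).
  rewrite beta_integral_eq by (auto; nra). unfold ml_coef, rl_term. rewrite poch_1.
  replace (a * INR k + a) with (a + a * INR k) by ring.
  replace (p + (a + a * INR k) - 1) with (p + a + a * INR k - 1) by ring.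
  replace (p + (a + a * INR k)) with (p + a + a * INR k) by ring.
  pose proof (Gamma_pos (a + a * INR k) ltac:(nra)). pose proof (Gamma_pos (p + a + a * INR k) ltac:(nra)).
  pose proof (INR_fact_lt_0 k). field. repeat split; lra.
Qed.

Theorem is_improper_RInt_frac_phi a t p : 0 < a -> 0 < t -> 0 < p ->
  exists V, is_improper_RInt t (fun u => Rpower (t - u) (p - 1) * phi a u) V /\
    is_series (fun k => (-1) ^ k * rl_term a t p k) (V / Gamma p).
Proof.
  intros Ha Ht Hp. destruct (is_improper_RInt_kernel_ML3_exists a t Ha Ht p Hp) as [V HV].
  exists V. split.
  - eapply is_improper_RInt_ext; [|exact HV]. intros u Hu. unfold beta_kernel, phi. ring.
  - pose proof (infinite_sum_kernel_ML3 a t Ha Ht p Hp V HV) as H. apply is_series_Reals in H.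
    pose proof (Gamma_pos p Hp).
    apply (@is_series_scal_l R_AbsRing R_NormedModule (/ Gamma p)) in H.
    replace (V / Gamma p) with (/ Gamma p * V) by (unfold Rdiv; ring).
    eapply is_series_ext; [|exact H]. intros k.
    change (/ Gamma p * (ml_coef a a 1 k * (-1) ^ k * beta_integral t p (a + a * INR k))
            = (-1) ^ k * rl_term a t p k).
    rewrite ml_beta_term_eq by auto. field. lra.
Qed.

(* With [p = a l] and [p = a l + a] the two fractional integrals are the
   alternating series of [rl_term a t (a l)] and of its shift, which telescope. *)
Theorem renewal_equation a l t : 0 < a -> (1 <= l)%nat -> 0 < t ->
  exists v1 v2 : R,
    improper_integral (fun u => Rpower (t - u) (a * INR l - 1) * phi a u) 0 t v1
    /\ improper_integral (fun u => m_al a l (t - u) * phi a u) 0 t v2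
    /\ m_al a l t = INR l * (v1 / Gamma (a * INR l)) + v2.
Proof.
  intros Ha Hl Ht. assert (Hl0 : 0 < INR l) by (apply lt_0_INR; lia).
  destruct (is_improper_RInt_frac_phi a t (a * INR l) Ha Ht ltac:(nra)) as [V1 [H1 S1]].
  destruct (is_improper_RInt_frac_phi a t (INR l * a + a) Ha Ht ltac:(nra)) as [V2 [H2 S2]].
  pose proof (Gamma_pos (INR l * a + a) ltac:(nra)).
  exists V1, (INR l / Gamma (INR l * a + a) * V2). split; [|split].
  - apply improper_integral_of_RInt, H1.
  - apply improper_integral_of_RInt.
    eapply is_improper_RInt_ext; [|apply is_improper_RInt_scal, H2].
    intros u Hu. rewrite m_al_closed_form by (auto; lra).
    replace ((INR l + 1) * a) with (INR l * a + a) by ring. unfold Rdiv. ring.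
  - assert (S2' : is_series (fun k => (-1) ^ k * rl_term a t (a * INR l) (S k)) (V2 / Gamma (INR l * a + a))).
    { eapply is_series_ext; [|exact S2]. intros k. unfold rl_term. rewrite S_INR.
      replace (INR l * a + a + a + a * INR k) with (a * INR l + a + a * (INR k + 1)) by ring.
      reflexivity. }
    pose proof (is_series_alternating_shift _ _ _ S1 S2') as Htel.
    rewrite m_al_closed_form by auto. unfold rl_term in Htel. simpl INR in Htel.
    replace (a * INR l + a + a * 0 - 1) with (INR l * a + a - 1) in Htel by ring.
    replace (a * INR l + a + a * 0) with ((INR l + 1) * a) in Htel by ring.
    replace (INR l * a + a) with ((INR l + 1) * a) in * by ring.
    unfold Rdiv at 1. rewrite Rmult_assoc. fold (Rdiv (Rpower t ((INR l + 1) * a - 1)) (Gamma ((INR l + 1) * a))).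
    pose proof (Gamma_pos (a * INR l) ltac:(nra)). rewrite <- Htel. field. split; lra.
Qed.

Theorem mainTheorem11 (a : R) (l : nat) (ha : 0 < a < 1) (hl : (1 <= l)%nat)
  (t : R) (ht : 0 < t) :
  (* the series defining m_{alpha,l}(t) converges to the closed form *)
  infinite_sum (fun n => INR n * Pnal a l n t)
    (INR l * Rpower t (INR l * a + a - 1) / Gamma ((INR l + 1) * a))
  /\ m_al a l t = INR l * Rpower t (INR l * a + a - 1) / Gamma ((INR l + 1) * a)
  (* generating-function derivative representation *)
  /\ derivable_pt_lim
       (fun k => Rpower t (a * INR l - 1)
                 * ML3 a (a * INR l) (INR l) (- (1 - exp (- k)) * Rpower t a))
       0 (- m_al a l t)
  (* renewal equation *)
  /\ exists v1 v2 : R,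
       improper_integral (fun u => Rpower (t - u) (a * INR l - 1) * phi a u) 0 t v1
       /\ improper_integral (fun u => m_al a l (t - u) * phi a u) 0 t v2
       /\ m_al a l t = INR l * (v1 / Gamma (a * INR l)) + v2.
Proof.
  destruct ha as [ha0 _].
  split; [apply infinite_sum_m_al; auto|].
  split; [apply m_al_closed_form; auto|].
  split; [apply derivable_pt_lim_m_generating; auto|].
  apply renewal_equation; auto.
Qed.
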